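(* Consider the $N$ iOFP systems with exosystem-generated disturbances described in the context, over a connected undirected graph with $E$ edges and incidence matrix $B=[b_{ig}]\in\mathbb R^{N\times E}$. Let $R=\mathrm{diag}(R_1,\dots,R_N)$, $m=\sum_i m_i$, $H=(B^+\otimes I_q)R\in\mathbb R^{Eq\times m}$ and let $H_g\in\mathbb R^{q\times m}$ be its $g$-th block row, so $H=[H_1;\dots;H_E]$. Let $s(w):=[s_1(w_1);\dots;s_N(w_N)]$ for $w=[w_1;\dots;w_N]\in\mathbb R^m$. For each edge $g=1,\dots,E$ set $\varrho_g=\sum_{j}b_{jg}y_j$ and use the controller $$\dot\zeta_g=s(\zeta_g)+H_g^\top\varrho_g,\qquad \dot\kappa_g=\delta_g\varrho_g^\top\varrho_g,\qquad v_g=H_g\zeta_g+\kappa_g\varrho_g,$$ with $\zeta_g\in\mathbb R^m$, $\kappa_g\in\mathbb R$, arbitrary gains $\delta_g>0$ and arbitrary initial conditions, and set the inputs $u_i=-\sum_{g=1}^E b_{ig}v_g$, $i=1,\dots,N$. If the closed-loop solution $(x,\zeta,\kappa)$ is bounded on $[0,\infty)$, then $\lim_{t\to\infty}\|y_i(t)-\bar y(t)\|=0$ for all $i$, where $\bar y=\frac1N\sum_j y_j$.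
   Context: Each system $\dot x_i=f(x_i,u_i,d_i)$, $y_i=h(x_i)$ has $x_i\in\mathbb R^n$, $u_i,y_i,d_i\in\mathbb R^q$; $f$ locally Lipschitz, $h$ continuously differentiable. iOFP with constant $\sigma\in\mathbb R$: there exist $\Phi:\mathbb R^n\times\mathbb R^n\to\mathbb R_{\ge0}$ (continuously differentiable) and class-$\mathcal K_\infty$ functions $\underline\alpha,\overline\alpha$ with $\underline\alpha(\|x_i-x_i'\|)\le\Phi(x_i,x_i')\le\overline\alpha(\|x_i-x_i'\|)$ and $\frac{\partial\Phi}{\partial x_i}(x_i,x_i')f(x_i,u_i,d_i)+\frac{\partial\Phi}{\partial x_i'}(x_i,x_i')f(x_i',u_i',d_i')\le\sigma\|y_i-y_i'\|^2+(y_i-y_i')^\top\big((u_i+d_i)-(u_i'+d_i')\big)$ for all arguments. Exosystems: $\dot w_i=s_i(w_i)$, $d_i=R_iw_i$, $w_i\in\mathbb R^{m_i}$, $s_i$ locally Lipschitz, $s_i(0)=0$, $(w_i-w_i')^\top(s_i(w_i)-s_i(w_i'))\le0$ for all $w_i,w_i'$. Graph: symmetric nonnegative adjacency $A=[a_{ij}]$, connected. Incidence matrix: for the $g$-th edge $(i,j)$ (each undirected edge taken once with an orientation), $b_{ig}=-\sqrt{a_{ij}}$, $b_{jg}=\sqrt{a_{ij}}$, and $b_{kg}=0$ otherwise; thus $L=BB^\top$ is the Laplacian. $B^+$ is the Moore–Penrose pseudoinverse, $\otimes$ the Kronecker product. *)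

(* Stdlib (classical reals). Vectors in R^k are encoded as functions
   nat -> R of which only the coordinates 0..k-1 are meaningful. *)
From Stdlib Require Import Reals Lra Lia.
Open Scope R_scope.

Definition vec := nat -> R.
Definition mat := nat -> nat -> R.

Fixpoint sumR (k : nat) (F : nat -> R) : R :=
  match k with O => 0 | S k' => sumR k' F + F k' end.

Fixpoint sumN (k : nat) (F : nat -> nat) : nat :=
  match k with O => O | S k' => (sumN k' F + F k')%nat end.

Definition dot (k : nat) (u v : vec) : R := sumR k (fun j => u j * v j).
Definition vnorm (k : nat) (v : vec) : R := sqrt (sumR k (fun j => v j ^ 2)).
Definition vsub (u v : vec) : vec := fun j => u j - v j.
Definition upd (x : vec) (j : nat) (r : R) : vec :=
  fun k => if Nat.eqb k j then r else x k.

Definition mmul (k : nat) (A B : mat) : mat :=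
  fun r c => sumR k (fun j => A r j * B j c).
Definition tr (A : mat) : mat := fun r c => A c r.
Definition idm : mat := fun r c => if Nat.eqb r c then 1 else 0.
Definition mat_eq (r c : nat) (A B : mat) : Prop :=
  forall i j, (i < r)%nat -> (j < c)%nat -> A i j = B i j.

Definition kron (p2 q2 : nat) (A Bm : mat) : mat :=
  fun r c => A (r / p2)%nat (c / q2)%nat * Bm (r mod p2)%nat (c mod q2)%nat.

Definition is_pinv (N E : nat) (B Bp : mat) : Prop :=
  mat_eq N E (mmul N (mmul E B Bp) B) B /\
  mat_eq E N (mmul E (mmul N Bp B) Bp) Bp /\
  mat_eq N N (tr (mmul E B Bp)) (mmul E B Bp) /\
  mat_eq E E (tr (mmul N Bp B)) (mmul N Bp B).

(* block offsets for R^m = R^{m_0} x ... x R^{m_{N-1}} *)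
Definition offs (m : nat -> nat) (i : nat) : nat := sumN i m.
Definition inblk (m : nat -> nat) (i c : nat) : bool :=
  (Nat.leb (offs m i) c && Nat.ltb c (offs m i + m i))%bool.

Definition blockdiag (q N : nat) (m : nat -> nat) (Rm : nat -> mat) : mat :=
  fun r c => let i := (r / q)%nat in
    if (Nat.ltb i N && inblk m i c)%bool
    then Rm i (r mod q)%nat (c - offs m i)%nat else 0.

Definition Hmat (q N : nat) (m : nat -> nat) (Bp : mat) (Rm : nat -> mat) : mat :=
  mmul (N * q) (kron q q Bp idm) (blockdiag q N m Rm).
Definition Hg (q N : nat) (m : nat -> nat) (Bp : mat) (Rm : nat -> mat)
  (g : nat) : mat := fun l c => Hmat q N m Bp Rm (g * q + l)%nat c.

Definition sstack (N : nat) (m : nat -> nat) (s : nat -> vec -> vec) (w : vec) : vec :=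
  fun c => sumR N (fun i =>
    if inblk m i c then s i (fun k => w (offs m i + k)%nat) (c - offs m i)%nat
    else 0).

Definition locLip (k kout : nat) (F : vec -> vec) : Prop :=
  forall x0, exists rad, rad > 0 /\ exists L, forall x x',
    vnorm k (vsub x x0) < rad -> vnorm k (vsub x' x0) < rad ->
    vnorm kout (vsub (F x) (F x')) <= L * vnorm k (vsub x x').

Definition dist3 (n q : nat) (x u d x' u' d' : vec) : R :=
  sqrt (vnorm n (vsub x x') ^ 2 + vnorm q (vsub u u') ^ 2 + vnorm q (vsub d d') ^ 2).

Definition locLip_f (n q : nat) (f : vec -> vec -> vec -> vec) : Prop :=
  forall x0 u0 d0, exists rad, rad > 0 /\ exists L, forall x u d x' u' d',
    dist3 n q x u d x0 u0 d0 < rad -> dist3 n q x' u' d' x0 u0 d0 < rad ->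
    vnorm n (vsub (f x u d) (f x' u' d')) <= L * dist3 n q x u d x' u' d'.

(* h : R^n -> R^q depends only on the n meaningful coordinates (encoding
   well-formedness) and is continuously differentiable: all partial
   derivatives exist everywhere and are continuous. *)
Definition C1map (n q : nat) (h : vec -> vec) : Prop :=
  (forall x x', (forall k, (k < n)%nat -> x k = x' k) ->
     forall l, (l < q)%nat -> h x l = h x' l) /\
  exists Dh : vec -> nat -> nat -> R,
    (forall x l j, (l < q)%nat -> (j < n)%nat ->
       derivable_pt_lim (fun r => h (upd x j r) l) (x j) (Dh x l j)) /\
    (forall l j, (l < q)%nat -> (j < n)%nat -> forall x eps, eps > 0 ->
       exists del, del > 0 /\ forall x',
         vnorm n (vsub x' x) < del -> Rabs (Dh x' l j - Dh x l j) < eps).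

Definition C1pair (n : nat) (Phi : vec -> vec -> R) (D1 D2 : vec -> vec -> vec) : Prop :=
  (forall x1 x2 x1' x2', (forall k, (k < n)%nat -> x1 k = x1' k /\ x2 k = x2' k) ->
     Phi x1 x2 = Phi x1' x2') /\
  (forall x x' j, (j < n)%nat ->
     derivable_pt_lim (fun r => Phi (upd x j r) x') (x j) (D1 x x' j) /\
     derivable_pt_lim (fun r => Phi x (upd x' j r)) (x' j) (D2 x x' j)) /\
  (forall j, (j < n)%nat -> forall x x' eps, eps > 0 ->
     exists del, del > 0 /\ forall z z',
       vnorm n (vsub z x) < del -> vnorm n (vsub z' x') < del ->
       Rabs (D1 z z' j - D1 x x' j) < eps /\ Rabs (D2 z z' j - D2 x x' j) < eps).

Definition classKinf (a : R -> R) : Prop :=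
  a 0 = 0 /\
  (forall r1 r2, 0 <= r1 -> r1 < r2 -> a r1 < a r2) /\
  (forall r, 0 <= r -> forall eps, eps > 0 -> exists del, del > 0 /\
     forall r', 0 <= r' -> Rabs (r' - r) < del -> Rabs (a r' - a r) < eps) /\
  (forall M, exists r, 0 <= r /\ a r > M).

Definition iOFP (n q : nat) (f : vec -> vec -> vec -> vec) (h : vec -> vec)
  (sigma : R) : Prop :=
  exists (Phi : vec -> vec -> R) (D1 D2 : vec -> vec -> vec) (al au : R -> R),
    C1pair n Phi D1 D2 /\ classKinf al /\ classKinf au /\
    (forall x x', 0 <= Phi x x' /\
       al (vnorm n (vsub x x')) <= Phi x x' /\ Phi x x' <= au (vnorm n (vsub x x'))) /\
    (forall x x' u u' d d',
       dot n (D1 x x') (f x u d) + dot n (D2 x x') (f x' u' d')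
       <= sigma * (vnorm q (vsub (h x) (h x'))) ^ 2
          + dot q (vsub (h x) (h x')) (fun l => (u l + d l) - (u' l + d' l))).

Definition exo_ok (mi : nat) (si : vec -> vec) : Prop :=
  locLip mi mi si /\
  (forall k, (k < mi)%nat -> si (fun _ => 0) k = 0) /\
  (forall w w', dot mi (vsub w w') (vsub (si w) (si w')) <= 0).

Inductive reach (N : nat) (A : mat) (i : nat) : nat -> Prop :=
| reach_refl : reach N A i i
| reach_step : forall j k, reach N A i j -> (k < N)%nat -> A j k > 0 -> reach N A i k.

Definition graph_ok (N : nat) (A : mat) : Prop :=
  (forall i j, (i < N)%nat -> (j < N)%nat -> A i j = A j i /\ 0 <= A i j) /\
  (forall i, (i < N)%nat -> A i i = 0) /\
  (forall i j, (i < N)%nat -> (j < N)%nat -> reach N A i j).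

Definition is_incidence (N : nat) (A : mat) (E : nat) (B : mat) : Prop :=
  exists src dst : nat -> nat,
    (forall g, (g < E)%nat ->
       (src g < N)%nat /\ (dst g < N)%nat /\ src g <> dst g /\
       A (src g) (dst g) > 0 /\
       B (src g) g = - sqrt (A (src g) (dst g)) /\
       B (dst g) g = sqrt (A (src g) (dst g)) /\
       (forall k, (k < N)%nat -> k <> src g -> k <> dst g -> B k g = 0)) /\
    (forall i j, (i < N)%nat -> (j < N)%nat -> i <> j -> A i j > 0 ->
       exists g, (g < E)%nat /\
         ((src g = i /\ dst g = j) \/ (src g = j /\ dst g = i))) /\
    (forall g g', (g < E)%nat -> (g' < E)%nat ->
       ((src g = src g' /\ dst g = dst g') \/ (src g = dst g' /\ dst g = src g')) ->
       g = g').

Definition rho (N : nat) (B : mat) (h : vec -> vec) (x : nat -> R -> vec)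
  (g : nat) (t : R) : vec :=
  fun l => sumR N (fun j => B j g * h (x j t) l).

Definition vout (q N : nat) (m : nat -> nat) (Bp : mat) (Rm : nat -> mat)
  (B : mat) (h : vec -> vec) (x : nat -> R -> vec)
  (zeta : nat -> R -> vec) (kappa : nat -> R -> R) (g : nat) (t : R) : vec :=
  fun l => sumR (offs m N) (fun c => Hg q N m Bp Rm g l c * zeta g t c)
           + kappa g t * rho N B h x g t l.

Definition uin (q N E : nat) (m : nat -> nat) (Bp : mat) (Rm : nat -> mat)
  (B : mat) (h : vec -> vec) (x : nat -> R -> vec)
  (zeta : nat -> R -> vec) (kappa : nat -> R -> R) (i : nat) (t : R) : vec :=
  fun l => - sumR E (fun g => B i g * vout q N m Bp Rm B h x zeta kappa g t l).

Definition din (m : nat -> nat) (Rm : nat -> mat) (w : nat -> R -> vec)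
  (i : nat) (t : R) : vec :=
  fun l => sumR (m i) (fun k => Rm i l k * w i t k).

Definition ybar (N : nat) (h : vec -> vec) (x : nat -> R -> vec) (t : R) : vec :=
  fun l => / INR N * sumR N (fun j => h (x j t) l).

(* The outputs deviate from their average by [y_i - ybar = sum_g (B^+)_gi rho_g], since
   [B B^+ = I - 11^T / N] for a connected graph, so it suffices to show that
   [Q = sum_g |rho_g|^2] tends to zero. The copies [zeta_g] reproduce the exosystem states up
   to errors [e_g], and the inputs cancel the disturbances up to their average. Summing the
   iOFP inequality over all pairs of agents, the remaining cross terms cancel against the
   derivative of
   [V = sum_(i,j) Phi(x_i, x_j) + 2N sum_g (|e_g|^2 / 2 + (kappa_g - k)^2 / (2 delta_g))]
   (the exosystems being monotone), leaving [V' <= -Q] once [k] dominates [|sigma|] times the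
   spread of [B^+]. Boundedness of the closed loop makes [Q] uniformly Lipschitz, and then
   [V >= 0] forces [Q -> 0]. *)

From Stdlib Require Import Reals Lra Lia Psatz FunctionalExtensionality Classical ClassicalEpsilon.
From Coquelicot Require Compactness.
Open Scope R_scope.

Lemma sumR_ext k F G : (forall j, (j < k)%nat -> F j = G j) -> sumR k F = sumR k G.
Proof.
  induction k as [|k IH]; intros H; simpl; auto.
  rewrite IH, H by (try intros; try apply H; lia); auto.
Qed.

Lemma sumR_plus k F G : sumR k (fun j => F j + G j) = sumR k F + sumR k G.
Proof. induction k; simpl; [lra|]. rewrite IHk; lra. Qed.

Lemma sumR_minus k F G : sumR k (fun j => F j - G j) = sumR k F - sumR k G.
Proof. induction k; simpl; [lra|]. rewrite IHk; lra. Qed.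

Lemma sumR_scal_l k c F : sumR k (fun j => c * F j) = c * sumR k F.
Proof. induction k; simpl; [lra|]. rewrite IHk; lra. Qed.

Lemma sumR_scal_r k c F : sumR k (fun j => F j * c) = sumR k F * c.
Proof. induction k; simpl; [lra|]. rewrite IHk; lra. Qed.

Lemma sumR_const k c : sumR k (fun _ => c) = INR k * c.
Proof. induction k; cbn [sumR]; [simpl; lra|]. rewrite IHk, S_INR; lra. Qed.

Lemma sumR_zero k : sumR k (fun _ => 0) = 0.
Proof. rewrite sumR_const; lra. Qed.

Lemma sumR_le k F G : (forall j, (j < k)%nat -> F j <= G j) -> sumR k F <= sumR k G.
Proof.
  induction k; simpl; intros H; [lra|].
  specialize (IHk (fun j Hj => H j ltac:(lia))). specialize (H k ltac:(lia)); lra.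
Qed.

Lemma sumR_nonneg k F : (forall j, (j < k)%nat -> 0 <= F j) -> 0 <= sumR k F.
Proof. intros H. rewrite <- (sumR_zero k). apply sumR_le; auto. Qed.

Lemma sumR_swap a b (F : nat -> nat -> R) :
  sumR a (fun i => sumR b (fun j => F i j)) = sumR b (fun j => sumR a (fun i => F i j)).
Proof. induction a; simpl. - rewrite sumR_zero; auto. - rewrite IHa, <- sumR_plus; auto. Qed.

Lemma sumR_split a b F : sumR (a + b) F = sumR a F + sumR b (fun k => F (a + k)%nat).
Proof.
  induction b; simpl. - rewrite Nat.add_0_r; lra.
  - rewrite Nat.add_succ_r; simpl; rewrite IHb; lra.
Qed.

Lemma sumR_delta k i F : (i < k)%nat -> sumR k (fun j => if Nat.eqb j i then F j else 0) = F i.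
Proof.
  induction k as [|k IH]; intros Hi; [lia|]. simpl. destruct (Nat.eqb_spec k i) as [->|Hki].
  - rewrite (sumR_ext i _ (fun _ => 0)), sumR_zero; [lra|].
    intros j Hj. destruct (Nat.eqb_spec j i); [lia|auto].
  - rewrite IH by lia. lra.
Qed.

Lemma Rabs_sumR k F : Rabs (sumR k F) <= sumR k (fun j => Rabs (F j)).
Proof.
  induction k; simpl. - rewrite Rabs_R0; lra.
  - eapply Rle_trans; [apply Rabs_triang|lra].
Qed.

Lemma sumR_term_le k F i :
  (forall j, (j < k)%nat -> 0 <= F j) -> (i < k)%nat -> F i <= sumR k F.
Proof.
  induction k as [|k IH]; intros H Hi; [lia|]. simpl. destruct (Nat.eq_dec i k) as [->|].
  - assert (0 <= sumR k F) by (apply sumR_nonneg; intros; apply H; lia). lra.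
  - assert (F i <= sumR k F) by (apply IH; [intros; apply H|]; lia).
    specialize (H k ltac:(lia)); lra.
Qed.

Lemma Rabs_sumR_le k F c : (forall j, (j < k)%nat -> Rabs (F j) <= c) ->
  Rabs (sumR k F) <= INR k * c.
Proof.
  intros H. eapply Rle_trans; [apply Rabs_sumR|]. rewrite <- sumR_const. apply sumR_le; auto.
Qed.

Lemma Rabs_sumR_mult_le k F G c : (forall j, (j < k)%nat -> Rabs (G j) <= c) ->
  Rabs (sumR k (fun j => F j * G j)) <= sumR k (fun j => Rabs (F j)) * c.
Proof.
  intros H. eapply Rle_trans; [apply Rabs_sumR|]. rewrite <- sumR_scal_r.
  apply sumR_le; intros j Hj. rewrite Rabs_mult.
  apply Rmult_le_compat_l; [apply Rabs_pos|auto].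
Qed.

Lemma Rabs_mult_le a b ca cb : Rabs a <= ca -> Rabs b <= cb -> Rabs (a * b) <= ca * cb.
Proof. intros; rewrite Rabs_mult; apply Rmult_le_compat; auto; apply Rabs_pos. Qed.

Lemma bounded_finite k (F : nat -> R) :
  exists K, 0 <= K /\ forall j, (j < k)%nat -> Rabs (F j) <= K.
Proof.
  exists (sumR k (fun j => Rabs (F j))). split.
  - apply sumR_nonneg; intros; apply Rabs_pos.
  - intros j Hj. apply (sumR_term_le k (fun j => Rabs (F j))); auto; intros; apply Rabs_pos.
Qed.

Lemma bounded_table a b (F : nat -> nat -> R) :
  exists K, 0 <= K /\ forall i j, (i < a)%nat -> (j < b)%nat -> Rabs (F i j) <= K.
Proof.
  exists (sumR a (fun i => sumR b (fun j => Rabs (F i j)))). split.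
  - apply sumR_nonneg; intros; apply sumR_nonneg; intros; apply Rabs_pos.
  - intros i j Hi Hj.
    eapply Rle_trans; [|apply (sumR_term_le a (fun i => sumR b (fun j => Rabs (F i j))) i)]; auto.
    + apply (sumR_term_le b (fun j => Rabs (F i j))); auto; intros; apply Rabs_pos.
    + intros; apply sumR_nonneg; intros; apply Rabs_pos.
Qed.

Lemma sumR_pair_diff k (a b : nat -> R) :
  sumR k (fun i => sumR k (fun j => (a i - a j) * (b i - b j))) =
  2 * INR k * sumR k (fun i => a i * b i) - 2 * sumR k a * sumR k b.
Proof.
  rewrite (sumR_ext k _ (fun i => INR k * (a i * b i) - a i * sumR k b - b i * sumR k a
                                  + sumR k (fun j => a j * b j))).
  - rewrite sumR_plus, !sumR_minus, sumR_const, !sumR_scal_l, !sumR_scal_r. ring.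
  - intros i Hi.
    rewrite (sumR_ext k _ (fun j => a i * b i - a i * b j - b i * a j + a j * b j)) by (intros; ring).
    rewrite sumR_plus, !sumR_minus, sumR_const, !sumR_scal_l. ring.
Qed.

(* Via Lagrange's identity. *)
Lemma cauchy_schwarz k a b : (sumR k (fun j => a j * b j)) ^ 2 <=
  sumR k (fun j => a j ^ 2) * sumR k (fun j => b j ^ 2).
Proof.
  assert (Hlag : sumR k (fun i => sumR k (fun j => (a i * b j - a j * b i) ^ 2)) =
    2 * (sumR k (fun j => a j ^ 2) * sumR k (fun j => b j ^ 2) - (sumR k (fun j => a j * b j)) ^ 2)).
  { rewrite (sumR_ext k _ (fun i => a i ^ 2 * sumR k (fun j => b j ^ 2)
        - 2 * (a i * b i) * sumR k (fun j => a j * b j) + b i ^ 2 * sumR k (fun j => a j ^ 2))).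
    - rewrite sumR_plus, sumR_minus, !sumR_scal_r, sumR_scal_l. ring.
    - intros i Hi. rewrite <- !sumR_scal_l, <- sumR_minus, <- sumR_plus.
      apply sumR_ext; intros; ring. }
  assert (0 <= sumR k (fun i => sumR k (fun j => (a i * b j - a j * b i) ^ 2))).
  { apply sumR_nonneg; intros; apply sumR_nonneg; intros; apply pow2_ge_0. }
  lra.
Qed.

Lemma vnorm_nonneg k v : 0 <= vnorm k v.
Proof. apply sqrt_pos. Qed.

Lemma vnorm_sq k v : vnorm k v ^ 2 = sumR k (fun j => v j ^ 2).
Proof. apply pow2_sqrt, sumR_nonneg; intros; apply pow2_ge_0. Qed.

Lemma coord_le_vnorm k v j : (j < k)%nat -> Rabs (v j) <= vnorm k v.
Proof.
  intros Hj. rewrite <- (sqrt_pow2 (Rabs (v j))) by apply Rabs_pos. apply sqrt_le_1_alt.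
  rewrite pow2_abs. apply (sumR_term_le k (fun j => v j ^ 2)); auto. intros; apply pow2_ge_0.
Qed.

Lemma vnorm_le_sumabs k v : vnorm k v <= sumR k (fun j => Rabs (v j)).
Proof.
  assert (H0 : 0 <= sumR k (fun j => Rabs (v j))) by (apply sumR_nonneg; intros; apply Rabs_pos).
  rewrite <- (sqrt_pow2 _ H0). apply sqrt_le_1_alt.
  induction k as [|k IH]; cbn [sumR]; [lra|].
  assert (0 <= sumR k (fun j => Rabs (v j))) by (apply sumR_nonneg; intros; apply Rabs_pos).
  specialize (IH H). pose proof (Rabs_pos (v k)). rewrite <- (pow2_abs (v k)). nra.
Qed.

Lemma vnorm_mono k a b : (forall j, (j < k)%nat -> Rabs (a j) <= Rabs (b j)) ->
  vnorm k a <= vnorm k b.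
Proof.
  intros H. apply sqrt_le_1_alt, sumR_le. intros j Hj.
  rewrite <- (pow2_abs (a j)), <- (pow2_abs (b j)). specialize (H j Hj).
  pose proof (Rabs_pos (a j)). nra.
Qed.

Lemma vnorm_zero k v : (forall j, (j < k)%nat -> v j = 0) -> vnorm k v = 0.
Proof.
  intros H. unfold vnorm. rewrite (sumR_ext k _ (fun _ => 0)), sumR_zero; [apply sqrt_0|].
  intros j Hj; rewrite H; auto; ring.
Qed.

Lemma coord_zero_of_vnorm k v j : vnorm k v <= 0 -> (j < k)%nat -> v j = 0.
Proof.
  intros H Hj. pose proof (coord_le_vnorm k v j Hj).
  destruct (Req_dec (v j) 0) as [|Hne]; auto. pose proof (Rabs_pos_lt _ Hne). lra.
Qed.

Lemma vnorm_split_l a b v : vnorm a v <= vnorm (a + b) v.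
Proof.
  apply sqrt_le_1_alt. rewrite sumR_split.
  assert (0 <= sumR b (fun k => v (a + k)%nat ^ 2)) by (apply sumR_nonneg; intros; apply pow2_ge_0).
  lra.
Qed.

Lemma vnorm_split_r a b v : vnorm b (fun k => v (a + k)%nat) <= vnorm (a + b) v.
Proof.
  apply sqrt_le_1_alt. rewrite sumR_split.
  assert (0 <= sumR a (fun k => v k ^ 2)) by (apply sumR_nonneg; intros; apply pow2_ge_0).
  lra.
Qed.

Lemma fin_min k (P : nat -> R -> Prop) :
  (forall j, (j < k)%nat -> exists d, d > 0 /\ P j d) ->
  (forall j d d', P j d -> 0 < d' <= d -> P j d') ->
  exists d, d > 0 /\ forall j, (j < k)%nat -> P j d.
Proof.
  intros H Hm. induction k as [|k IH].
  - exists 1; split; [lra|intros; lia].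
  - destruct IH as [d [Hd Hj]]; [intros; apply H; lia|].
    destruct (H k ltac:(lia)) as [d' [Hd' Hk]].
    assert (Hmin : 0 < Rmin d d') by (apply Rmin_pos; lra).
    exists (Rmin d d'); split; [lra|]. intros j Hj'. destruct (Nat.eq_dec j k) as [->|].
    + apply (Hm _ d'); auto. split; [lra|apply Rmin_r].
    + apply (Hm _ d); [apply Hj; lia|]. split; [lra|apply Rmin_l].
Qed.

(** * Differential calculus of functions of finitely many variables *)

Lemma mvt_gen (phi phi' : R -> R) a b :
  (forall r, derivable_pt_lim phi r (phi' r)) ->
  exists c, phi b - phi a = phi' c * (b - a) /\ Rabs (c - a) <= Rabs (b - a).
Proof.
  intros H. destruct (Rtotal_order a b) as [Hab|[<-|Hab]].
  - destruct (MVT_cor2 phi phi' a b Hab (fun c _ => H c)) as [c [E Hc]].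
    exists c; split; auto. rewrite !Rabs_right by lra. lra.
  - exists a. split; [ring|]. lra.
  - destruct (MVT_cor2 phi phi' b a Hab (fun c _ => H c)) as [c [E Hc]].
    exists c; split; [lra|]. rewrite !Rabs_left by lra. lra.
Qed.

Lemma nonincreasing_of_deriv_nonpos (V V' : R -> R) a :
  (forall t, a <= t -> derivable_pt_lim V t (V' t)) -> (forall t, a <= t -> V' t <= 0) ->
  forall r s, a <= r -> r <= s -> V s <= V r.
Proof.
  intros HV HV' r s Hr Hrs. destruct (Rle_lt_or_eq_dec _ _ Hrs) as [Hlt|<-]; [|lra].
  destruct (MVT_cor2 V V' r s Hlt (fun c Hc => HV c ltac:(lra))) as [c [Ec Hc]].
  pose proof (HV' c ltac:(lra)). nra.
Qed.

Lemma lipschitz_of_deriv_bounded (Q Q' : R -> R) a L :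
  (forall t, a <= t -> derivable_pt_lim Q t (Q' t)) -> (forall t, a <= t -> Rabs (Q' t) <= L) ->
  forall t s, a <= t -> a <= s -> Rabs (Q t - Q s) <= L * Rabs (t - s).
Proof.
  intros HQ HL.
  assert (Hlt : forall t s, a <= s -> s < t -> Rabs (Q t - Q s) <= L * Rabs (t - s)).
  { intros t s Hs Hst. destruct (MVT_cor2 Q Q' s t Hst (fun c Hc => HQ c ltac:(lra))) as [c [-> Hc]].
    rewrite Rabs_mult. apply Rmult_le_compat_r; [apply Rabs_pos|]. apply HL; lra. }
  intros t s Ht Hs. destruct (Rtotal_order s t) as [Hst|[<-|Hst]]; auto.
  - rewrite !Rminus_diag, Rabs_R0. pose proof (Rle_trans _ _ _ (Rabs_pos _) (HL s Hs)). lra.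
  - rewrite Rabs_minus_sym, (Rabs_minus_sym t). auto.
Qed.

Lemma upd_upd (z : vec) j r r' : upd (upd z j r) j r' = upd z j r'.
Proof. apply functional_extensionality; intros c. unfold upd. destruct (Nat.eqb c j); auto. Qed.

Lemma upd_same (z : vec) j r : upd z j r j = r.
Proof. unfold upd. rewrite Nat.eqb_refl; auto. Qed.

Definition partials (k : nat) (F : vec -> R) (DF : vec -> nat -> R) :=
  forall z j, (j < k)%nat -> derivable_pt_lim (fun r => F (upd z j r)) (z j) (DF z j).
Definition depends_on (k : nat) (F : vec -> R) :=
  forall z z', (forall c, (c < k)%nat -> z c = z' c) -> F z = F z'.
Definition continuous_partials (k : nat) (DF : vec -> nat -> R) :=
  forall j, (j < k)%nat -> forall z eps, eps > 0 -> exists del, del > 0 /\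
    forall z', vnorm k (vsub z' z) < del -> Rabs (DF z' j - DF z j) < eps.

Lemma partials_everywhere k F DF : partials k F DF -> forall z j, (j < k)%nat ->
  forall r, derivable_pt_lim (fun r => F (upd z j r)) r (DF (upd z j r) j).
Proof.
  intros H z j Hj r. specialize (H (upd z j r) j Hj). rewrite upd_same in H.
  replace (fun r0 => F (upd z j r0)) with (fun r0 => F (upd (upd z j r) j r0)); auto.
  apply functional_extensionality; intros; rewrite upd_upd; auto.
Qed.

Definition splice (p : nat) (z z' : vec) : vec := fun c => if Nat.ltb c p then z' c else z c.

Lemma splice_S p z z' : splice (S p) z z' = upd (splice p z z') p (z' p).
Proof.
  apply functional_extensionality; intros c; unfold splice, upd.
  destruct (Nat.eqb_spec c p) as [->|]; [rewrite (proj2 (Nat.ltb_lt p (S p))) by lia; auto|].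
  destruct (Nat.ltb_spec c (S p)); destruct (Nat.ltb_spec c p); auto; lia.
Qed.

Lemma splice_upd p z z' : splice p z z' = upd (splice p z z') p (z p).
Proof.
  apply functional_extensionality; intros c; unfold splice, upd.
  destruct (Nat.eqb_spec c p) as [->|]; [rewrite (proj2 (Nat.ltb_ge p p)) by lia|]; auto.
Qed.

(* Move one coordinate at a time and apply the mean value theorem to each move. *)
Lemma coord_mvt k F DF : depends_on k F -> partials k F DF ->
  forall z z', exists xi : nat -> vec,
    (forall j c, (j < k)%nat -> (c < k)%nat -> Rabs (xi j c - z c) <= Rabs (z' c - z c)) /\
    F z' - F z = sumR k (fun j => DF (xi j) j * (z' j - z j)).
Proof.
  intros Hd Hp z z'.
  assert (Hpre : forall p, (p <= k)%nat -> exists xi : nat -> vec,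
    (forall j c, (j < p)%nat -> (c < k)%nat -> Rabs (xi j c - z c) <= Rabs (z' c - z c)) /\
    F (splice p z z') - F z = sumR p (fun j => DF (xi j) j * (z' j - z j))).
  { induction p as [|p IH]; intros Hpk.
    - exists (fun _ => z). split; [intros; lia|]. simpl.
      replace (splice 0 z z') with z; [ring|].
      apply functional_extensionality; intros c; unfold splice; destruct c; auto.
    - destruct (IH ltac:(lia)) as [xi [Hxi E]]. set (zp := splice p z z') in *.
      destruct (mvt_gen (fun r => F (upd zp p r)) (fun r => DF (upd zp p r) p) (z p) (z' p)
        (partials_everywhere k F DF Hp zp p ltac:(lia))) as [c [Ec Hc]].
      exists (fun j => if Nat.eqb j p then upd zp p c else xi j). split.
      + intros j c' Hj Hc'. destruct (Nat.eqb_spec j p) as [->|]; [|apply Hxi; lia].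
        unfold upd, zp, splice. destruct (Nat.eqb_spec c' p) as [->|]; auto.
        destruct (Nat.ltb_spec c' p); [lra|]. rewrite Rminus_diag, Rabs_R0. apply Rabs_pos.
      + cbn [sumR]. rewrite Nat.eqb_refl.
        rewrite (sumR_ext p _ (fun j => DF (xi j) j * (z' j - z j))).
        * assert (Hzp : upd zp p (z p) = zp) by (unfold zp; rewrite <- splice_upd; auto).
          rewrite <- E, splice_S. fold zp. rewrite Hzp in Ec. lra.
        * intros j Hj. destruct (Nat.eqb_spec j p); [lia|auto]. }
  destruct (Hpre k ltac:(lia)) as [xi [H1 H2]]. exists xi; split; auto.
  rewrite <- H2. f_equal. apply Hd. intros c Hc'. unfold splice.
  rewrite (proj2 (Nat.ltb_lt c k)); auto.
Qed.

Lemma prod_err a b A Bv eta : Rabs (a - A) < eta -> Rabs (b - Bv) < eta -> eta <= 1 ->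
  Rabs (a * b - A * Bv) <= eta * (Rabs Bv + 1 + Rabs A).
Proof.
  intros H1 H2 He.
  replace (a * b - A * Bv) with ((a - A) * b + A * (b - Bv)) by ring.
  eapply Rle_trans; [apply Rabs_triang|]. rewrite !Rabs_mult.
  assert (Rabs b <= Rabs Bv + 1).
  { replace b with ((b - Bv) + Bv) by ring. eapply Rle_trans; [apply Rabs_triang|lra]. }
  pose proof (Rabs_pos (a - A)). pose proof (Rabs_pos A). pose proof (Rabs_pos b).
  pose proof (Rabs_pos (b - Bv)). nra.
Qed.

Lemma quotients_close k (gam : R -> vec) (gam' : vec) t :
  (forall j, (j < k)%nat -> derivable_pt_lim (fun s => gam s j) t (gam' j)) ->
  forall eta, eta > 0 -> exists D, D > 0 /\ forall hh, hh <> 0 -> Rabs hh < D ->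
    forall j, (j < k)%nat -> Rabs ((gam (t + hh) j - gam t j) / hh - gam' j) < eta.
Proof.
  intros Hg eta Heta.
  destruct (fin_min k (fun j d => forall hh, hh <> 0 -> Rabs hh < d ->
     Rabs ((gam (t + hh) j - gam t j) / hh - gam' j) < eta)) as [D [HD P]].
  - intros j Hj. destruct (Hg j Hj eta Heta) as [dl Hdl]. exists dl; split; [apply cond_pos|auto].
  - intros j d d' H [H1 H2] hh Hh Hl. apply H; auto; lra.
  - exists D; split; auto.
Qed.

Lemma increment_vnorm_le k (gam : R -> vec) (gam' : vec) t hh : hh <> 0 ->
  (forall j, (j < k)%nat -> Rabs ((gam (t + hh) j - gam t j) / hh - gam' j) < 1) ->
  vnorm k (vsub (gam (t + hh)) (gam t)) <= Rabs hh * sumR k (fun j => Rabs (gam' j) + 1).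
Proof.
  intros Hh Hq. eapply Rle_trans; [apply vnorm_le_sumabs|].
  rewrite <- sumR_scal_l. apply sumR_le. intros j Hj. unfold vsub.
  specialize (Hq j Hj). set (dg := gam (t + hh) j - gam t j) in *.
  replace dg with (hh * (dg / hh)) by (field; auto).
  rewrite Rabs_mult. apply Rmult_le_compat_l; [apply Rabs_pos|].
  replace (dg / hh) with ((dg / hh - gam' j) + gam' j) by ring.
  eapply Rle_trans; [apply Rabs_triang|lra].
Qed.

Lemma chain_rule k F DF (gam : R -> vec) (gam' : vec) t :
  depends_on k F -> partials k F DF -> continuous_partials k DF ->
  (forall j, (j < k)%nat -> derivable_pt_lim (fun s => gam s j) t (gam' j)) ->
  derivable_pt_lim (fun s => F (gam s)) t (sumR k (fun j => DF (gam t) j * gam' j)).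
Proof.
  intros Hd Hp Hc Hg eps Heps.
  set (A := fun j => DF (gam t) j).
  set (S := sumR k (fun j => Rabs (gam' j) + 1 + Rabs (A j))).
  set (S' := sumR k (fun j => Rabs (gam' j) + 1)).
  assert (HS : 0 <= S') by (apply sumR_nonneg; intros; pose proof (Rabs_pos (gam' j)); lra).
  assert (HS0 : 0 <= S)
    by (apply sumR_nonneg; intros; pose proof (Rabs_pos (gam' j)); pose proof (Rabs_pos (A j)); lra).
  set (eta := Rmin 1 (eps / (S + 1))).
  assert (Heta : 0 < eta) by (apply Rmin_pos; [lra|apply Rdiv_lt_0_compat; lra]).
  assert (Heta1 : eta <= 1) by apply Rmin_l.
  assert (HetaS : eta * S < eps).
  { apply Rle_lt_trans with (eps / (S + 1) * S); [apply Rmult_le_compat_r; [lra|apply Rmin_r]|].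
    apply (Rmult_lt_reg_r (S + 1)); [lra|]. field_simplify; nra. }
  destruct (quotients_close k gam gam' t Hg eta Heta) as [D1 [HD1 P1]].
  destruct (fin_min k (fun j d => forall z', vnorm k (vsub z' (gam t)) < d ->
      Rabs (DF z' j - A j) < eta)) as [D2 [HD2 P2]].
  { intros j Hj. destruct (Hc j Hj (gam t) eta Heta) as [dl [Hdl H]]. exists dl; split; auto. }
  { intros j d d' H [H1 H2] z' Hz. apply H; lra. }
  assert (Hdpos : 0 < Rmin D1 (D2 / (S' + 1))) by (apply Rmin_pos; [lra|apply Rdiv_lt_0_compat; lra]).
  exists (mkposreal _ Hdpos). intros hh Hh Hlt. simpl in Hlt.
  assert (Hl1 : Rabs hh < D1) by (eapply Rlt_le_trans; [apply Hlt|apply Rmin_l]).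
  assert (Hl2 : Rabs hh * (S' + 1) < D2).
  { apply (Rmult_lt_compat_r (S' + 1)) in Hlt; [|lra].
    eapply Rlt_le_trans; [apply Hlt|].
    apply (Rmult_le_reg_r (/ (S' + 1))); [apply Rinv_0_lt_compat; lra|].
    rewrite Rmult_assoc, Rinv_r, Rmult_1_r by lra. apply Rmin_r. }
  assert (Hstep : vnorm k (vsub (gam (t + hh)) (gam t)) < D2).
  { eapply Rle_lt_trans; [apply increment_vnorm_le; auto|].
    - intros j Hj. eapply Rlt_le_trans; [apply P1|]; auto.
    - change (Rabs hh * S' < D2). pose proof (Rabs_pos hh). nra. }
  destruct (coord_mvt k F DF Hd Hp (gam t) (gam (t + hh))) as [xi [Hxi ->]].
  unfold Rdiv at 1. rewrite (Rmult_comm (sumR k _)), <- sumR_scal_l, <- sumR_minus.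
  eapply Rle_lt_trans; [apply Rabs_sumR|].
  eapply Rle_lt_trans; [apply (sumR_le _ _ (fun j => eta * (Rabs (gam' j) + 1 + Rabs (A j))))|].
  - intros j Hj.
    replace (/ hh * (DF (xi j) j * (gam (t + hh) j - gam t j)))
      with (DF (xi j) j * ((gam (t + hh) j - gam t j) / hh)) by (field; auto).
    apply prod_err; auto. apply P2; auto. eapply Rle_lt_trans; [|apply Hstep].
    apply vnorm_mono. intros c Hc'. apply Hxi; auto.
  - rewrite sumR_scal_l. fold S. auto.
Qed.

(** * Bounds on compact boxes *)

Definition in_box (k : nat) (M : R) (z : vec) := forall j, (j < k)%nat -> Rabs (z j) <= M.

Definition locally_bounded (k : nat) (G : vec -> R) :=
  forall z0, exists r K, r > 0 /\ forall z, vnorm k (vsub z z0) < r -> G z <= K.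

Fixpoint toTn (k : nat) (z : vec) : Compactness.Tn k R :=
  match k with O => tt | S k' => (z 0%nat, toTn k' (fun j => z (S j))) end.
Fixpoint fromTn (k : nat) : Compactness.Tn k R -> vec :=
  match k with O => fun _ _ => 0
  | S k' => fun p j => match j with O => fst p | S j' => fromTn k' (snd p) j' end end.

Lemma fromTn_toTn k z j : (j < k)%nat -> fromTn k (toTn k z) j = z j.
Proof.
  revert z j; induction k as [|k IH]; intros z j Hj; [lia|].
  destruct j; simpl; auto. rewrite IH by lia; auto.
Qed.

Lemma bounded_n_toTn k M z : in_box k M z ->
  Compactness.bounded_n k (toTn k (fun _ => -M)) (toTn k (fun _ => M)) (toTn k z).
Proof.
  revert z; induction k as [|k IH]; intros z H; simpl; auto. split.
  - specialize (H 0%nat ltac:(lia)). pose proof (Rle_abs (z 0%nat)).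
    pose proof (Rle_abs (- z 0%nat)). rewrite Rabs_Ropp in *. simpl; lra.
  - apply IH. intros j Hj; apply H; lia.
Qed.

Lemma close_n_fromTn k d x t : Compactness.close_n k d x t ->
  forall j, (j < k)%nat -> Rabs (fromTn k x j - fromTn k t j) < d.
Proof.
  induction k as [|k IH]; intros Hc j Hj; [lia|]. destruct x as [x1 x2], t as [t1 t2].
  destruct Hc as [H1 H2]. destruct j; simpl; auto. apply IH; auto; lia.
Qed.

Lemma vnorm_lt_of_coords k v c : 0 < c -> (forall j, (j < k)%nat -> Rabs (v j) < c) ->
  vnorm k v < (INR k + 1) * c.
Proof.
  intros Hc H. eapply Rle_lt_trans; [apply vnorm_le_sumabs|].
  eapply Rle_lt_trans; [apply (sumR_le _ _ (fun _ => c)); intros; left; auto|].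
  rewrite sumR_const. lra.
Qed.

(* Compactness of the box: the gauge [delta] is chosen so small that the bound [Kb z0]
   of every local neighbourhood is at most [1 / d] for the resulting fineness [d]. *)
Lemma bounded_on_box k (G : vec -> R) : locally_bounded k G ->
  forall M, exists K, forall z, in_box k M z -> G z <= K.
Proof.
  intros H M.
  assert (Hs : forall z0 : vec, {p : R * R |
      fst p > 0 /\ forall z, vnorm k (vsub z z0) < fst p -> G z <= snd p}).
  { intros z0. apply constructive_indefinite_description.
    destruct (H z0) as [r [K [Hr HK]]]. exists (r, K); simpl; auto. }
  set (rad := fun z0 => fst (proj1_sig (Hs z0))).
  set (Kb := fun z0 => snd (proj1_sig (Hs z0))).
  assert (Hrad : forall z0, rad z0 > 0) by (intros z0; exact (proj1 (proj2_sig (Hs z0)))).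
  assert (HKb : forall z0 z, vnorm k (vsub z z0) < rad z0 -> G z <= Kb z0)
    by (intros z0; exact (proj2 (proj2_sig (Hs z0)))).
  assert (Hk1 : 0 < INR k + 1) by (pose proof (pos_INR k); lra).
  assert (Hdp : forall t : Compactness.Tn k R,
     0 < Rmin (rad (fromTn k t) / (INR k + 1)) (1 / (1 + Rmax 0 (Kb (fromTn k t))))).
  { intros t. pose proof (Hrad (fromTn k t)). pose proof (Rmax_l 0 (Kb (fromTn k t))).
    apply Rmin_pos; apply Rdiv_lt_0_compat; lra. }
  destruct (Compactness.compactness_value k (toTn k (fun _ => -M)) (toTn k (fun _ => M))
    (fun t => mkposreal _ (Hdp t))) as [d Hd].
  exists (1 / d). intros z Hz. apply NNPP. intros Hn.
  apply (Hd (toTn k z) (bounded_n_toTn k M z Hz)). intros [t [_ [Hcl Hdt]]]. apply Hn.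
  simpl in Hdt. set (z0 := fromTn k t) in *. set (KK := Rmax 0 (Kb z0)).
  assert (Hd1 : d <= 1 / (1 + KK)) by (eapply Rle_trans; [apply Hdt|apply Rmin_r]).
  assert (HG : G z <= Kb z0).
  { apply HKb. replace (rad z0) with ((INR k + 1) * (rad z0 / (INR k + 1))) by (field; lra).
    apply vnorm_lt_of_coords; [apply Rdiv_lt_0_compat; [apply Hrad|auto]|].
    intros j Hj. pose proof (close_n_fromTn k _ _ _ Hcl j Hj) as Hc.
    rewrite fromTn_toTn in Hc by auto. unfold vsub. eapply Rlt_le_trans; [apply Hc|].
    apply Rmin_l. }
  pose proof (Rmax_r 0 (Kb z0)). pose proof (Rmax_l 0 (Kb z0)). pose proof (cond_pos d).
  assert (1 + KK <= 1 / d).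
  { apply (Rmult_le_reg_r d); [lra|]. unfold Rdiv. rewrite Rmult_assoc, Rinv_l by lra.
    apply (Rmult_le_compat_l (1 + KK)) in Hd1; [|unfold KK; lra].
    replace ((1 + KK) * (1 / (1 + KK))) with 1 in Hd1 by (field; unfold KK; lra). lra. }
  unfold KK in *. lra.
Qed.

Lemma locally_bounded_sumR k J (G : nat -> vec -> R) :
  (forall j, (j < J)%nat -> locally_bounded k (G j)) ->
  locally_bounded k (fun z => sumR J (fun j => G j z)).
Proof.
  induction J as [|J IH]; intros H z0.
  - exists 1, 0. split; [lra|]. intros; simpl; lra.
  - destruct (IH (fun j Hj => H j ltac:(lia)) z0) as [r1 [K1 [Hr1 HK1]]].
    destruct (H J ltac:(lia) z0) as [r2 [K2 [Hr2 HK2]]].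
    exists (Rmin r1 r2), (K1 + K2). split; [apply Rmin_pos; lra|]. intros z Hz. simpl.
    pose proof (HK1 z (Rlt_le_trans _ _ _ Hz (Rmin_l _ _))).
    pose proof (HK2 z (Rlt_le_trans _ _ _ Hz (Rmin_r _ _))). lra.
Qed.

Lemma locally_bounded_of_continuous k (G : vec -> R) :
  (forall z eps, eps > 0 -> exists del, del > 0 /\
     forall z', vnorm k (vsub z' z) < del -> Rabs (G z' - G z) < eps) ->
  locally_bounded k (fun z => Rabs (G z)).
Proof.
  intros Hc z0. destruct (Hc z0 1 ltac:(lra)) as [d [Hd Hd']]. exists d, (Rabs (G z0) + 1).
  split; auto. intros z Hz. specialize (Hd' z Hz).
  replace (G z) with ((G z - G z0) + G z0) by ring. eapply Rle_trans; [apply Rabs_triang|lra].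
Qed.

Lemma locally_bounded_C1 k (F : vec -> R) (DF : vec -> nat -> R) :
  depends_on k F -> partials k F DF -> continuous_partials k DF ->
  locally_bounded k (fun z => Rabs (F z)).
Proof.
  intros Hd Hp Hc z0.
  destruct (fin_min k (fun j d => forall z', vnorm k (vsub z' z0) < d ->
      Rabs (DF z' j - DF z0 j) < 1)) as [D [HD PD]].
  { intros j Hj. destruct (Hc j Hj z0 1 ltac:(lra)) as [d [Hd' Hd'']]. exists d; split; auto. }
  { intros j d d' Hx [H1 H2] z' Hz'. apply Hx; lra. }
  exists (Rmin D 1), (Rabs (F z0) + sumR k (fun j => Rabs (DF z0 j) + 1)).
  split; [apply Rmin_pos; lra|].
  intros z Hz. destruct (coord_mvt k F DF Hd Hp z0 z) as [xi [Hxi E]].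
  replace (F z) with (F z0 + sumR k (fun j => DF (xi j) j * (z j - z0 j))) by lra.
  eapply Rle_trans; [apply Rabs_triang|]. apply Rplus_le_compat_l.
  eapply Rle_trans; [apply Rabs_sumR|]. apply sumR_le. intros j Hj.
  rewrite <- (Rmult_1_r (Rabs (DF z0 j) + 1)). apply Rabs_mult_le.
  - assert (Hv : vnorm k (vsub (xi j) z0) < D).
    { eapply Rle_lt_trans; [|eapply Rlt_le_trans; [apply Hz|apply Rmin_l]].
      apply vnorm_mono. intros c Hc'. apply Hxi; auto. }
    specialize (PD j Hj (xi j) Hv).
    replace (DF (xi j) j) with ((DF (xi j) j - DF z0 j) + DF z0 j) by ring.
    eapply Rle_trans; [apply Rabs_triang|lra].
  - eapply Rle_trans; [apply (coord_le_vnorm k (vsub z z0) j Hj)|].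
    left. eapply Rlt_le_trans; [apply Hz|apply Rmin_r].
Qed.

(** * The incidence matrix and its pseudoinverse *)

Lemma incidence_edge_sum N (A B : mat) g s d (z : nat -> R) :
  (s < N)%nat -> (d < N)%nat -> s <> d ->
  B s g = - sqrt (A s d) -> B d g = sqrt (A s d) ->
  (forall k, (k < N)%nat -> k <> s -> k <> d -> B k g = 0) ->
  sumR N (fun k => B k g * z k) = sqrt (A s d) * (z d - z s).
Proof.
  intros Hs Hd Hne Bs Bd Bo.
  rewrite (sumR_ext N _ (fun k => (if Nat.eqb k s then B s g * z s else 0) +
                                  (if Nat.eqb k d then B d g * z d else 0))).
  - rewrite sumR_plus, (sumR_delta N s (fun _ => _)), (sumR_delta N d (fun _ => _)) by auto.
    rewrite Bs, Bd. ring.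
  - intros k Hk. destruct (Nat.eqb_spec k s); destruct (Nat.eqb_spec k d); subst; try lia;
      try ring. rewrite Bo by auto; ring.
Qed.

Lemma incidence_colsum N A E B : is_incidence N A E B ->
  forall g, (g < E)%nat -> sumR N (fun k => B k g) = 0.
Proof.
  intros [src [dst [H1 _]]] g Hg. destruct (H1 g Hg) as [Hs [Hd [Hne [_ [Bs [Bd Bo]]]]]].
  rewrite (sumR_ext N _ (fun k => B k g * (fun _ => 1) k)) by (intros; ring).
  rewrite (incidence_edge_sum N A B g (src g) (dst g)) by auto. ring.
Qed.

Lemma incidence_left_kernel N A E B (z : nat -> R) :
  graph_ok N A -> is_incidence N A E B ->
  (forall g, (g < E)%nat -> sumR N (fun k => B k g * z k) = 0) ->
  (0 < N)%nat -> forall k, (k < N)%nat -> z k = z 0%nat.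
Proof.
  intros [_ [_ Hconn]] [src [dst [H1 [H2 _]]]] Hz HN k Hk.
  assert (Hedge : forall g, (g < E)%nat -> z (src g) = z (dst g)).
  { intros g Hg. destruct (H1 g Hg) as [Hs [Hd [Hne [Ha [Bs [Bd Bo]]]]]].
    pose proof (Hz g Hg) as Hb. rewrite (incidence_edge_sum N A B g (src g) (dst g)) in Hb by auto.
    assert (0 < sqrt (A (src g) (dst g))) by (apply sqrt_lt_R0; lra).
    apply Rmult_integral in Hb. lra. }
  assert (Hreach : forall k, reach N A 0 k -> (k < N)%nat /\ z k = z 0%nat).
  { intros k' Hr. induction Hr as [|j k' _ [Hj IH] Hk' Hjk]; auto.
    split; auto. destruct (Nat.eq_dec j k') as [<-|Hne]; auto.
    destruct (H2 j k') as [g [Hg [[Es Ed]|[Es Ed]]]]; auto; rewrite <- IH, <- Es, <- Ed.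
    - symmetry; apply Hedge; auto.
    - apply Hedge; auto. }
  apply Hreach, Hconn; auto.
Qed.

Lemma pinv_rowsum N E (B Bp : mat) :
  (forall g, (g < E)%nat -> sumR N (fun k => B k g) = 0) -> is_pinv N E B Bp ->
  forall g, (g < E)%nat -> sumR N (fun j => Bp g j) = 0.
Proof.
  intros Hcol [_ [Hp2 [Hp3 _]]] g Hg.
  rewrite (sumR_ext N _ (fun j => sumR N (fun k => Bp g k * mmul E B Bp k j))).
  - rewrite sumR_swap, (sumR_ext N _ (fun _ => 0)); [apply sumR_zero|].
    intros k Hk. rewrite sumR_scal_l.
    rewrite (sumR_ext N _ (fun j => mmul E B Bp j k)) by (intros j Hj; apply (Hp3 j k Hj Hk)).
    unfold mmul. rewrite sumR_swap, (sumR_ext E _ (fun _ => 0)); [rewrite sumR_zero; ring|].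
    intros e He. rewrite sumR_scal_r, Hcol by auto. ring.
  - intros j Hj. rewrite <- (Hp2 g j Hg Hj). unfold mmul.
    rewrite (sumR_ext N _ (fun k => sumR E (fun e => Bp g k * B k e * Bp e j))).
    + rewrite sumR_swap. apply sumR_ext. intros e He. rewrite <- sumR_scal_r. auto.
    + intros k Hk. rewrite <- sumR_scal_l. apply sumR_ext; intros; ring.
Qed.

Lemma incidence_pinv_projector N A E B Bp :
  (0 < N)%nat -> graph_ok N A -> is_incidence N A E B -> is_pinv N E B Bp ->
  forall i j, (i < N)%nat -> (j < N)%nat ->
  sumR E (fun g => B i g * Bp g j) = (if Nat.eqb i j then 1 else 0) - / INR N.
Proof.
  intros HN HA HB HBp.
  pose proof (incidence_colsum N A E B HB) as Hcol.
  pose proof (pinv_rowsum N E B Bp Hcol HBp) as Hrow.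
  destruct HBp as [Hp1 [_ [Hp3 _]]].
  set (P := mmul E B Bp).
  assert (Psym : forall i j, (i < N)%nat -> (j < N)%nat -> P i j = P j i)
    by (intros i j Hi Hj; symmetry; exact (Hp3 i j Hi Hj)).
  assert (HNr : INR N <> 0) by (apply not_0_INR; lia).
  intros i0 j Hi0 Hj.
  set (z := fun i => (if Nat.eqb i j then 1 else 0) - / INR N - P i j).
  assert (Bz : forall g, (g < E)%nat -> sumR N (fun i => B i g * z i) = 0).
  { intros g Hg. unfold z.
    rewrite (sumR_ext N _ (fun i => (if Nat.eqb i j then B j g else 0) - B i g * / INR N
                                     - P j i * B i g)).
    - rewrite !sumR_minus, sumR_scal_r, Hcol, sumR_delta by auto.
      rewrite (Hp1 j g Hj Hg : sumR N (fun k => P j k * B k g) = B j g). ring.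
    - intros i Hi. rewrite (Psym j i) by auto. destruct (Nat.eqb_spec i j); subst; ring. }
  assert (Hsum : sumR N z = 0).
  { unfold z. rewrite !sumR_minus, sumR_const, (sumR_delta N j (fun _ => 1)) by auto.
    unfold P, mmul. rewrite sumR_swap, (sumR_ext E _ (fun _ => 0)).
    - rewrite sumR_zero. field; auto.
    - intros e He. rewrite sumR_scal_r, Hcol by auto. ring. }
  pose proof (incidence_left_kernel N A E B z HA HB Bz HN) as Hconst.
  rewrite (sumR_ext N z (fun _ => z 0%nat)), sumR_const in Hsum by auto.
  apply Rmult_integral in Hsum as [Hsum|Hsum]; [contradiction|].
  specialize (Hconst i0 Hi0). unfold z in Hconst at 1. unfold P, mmul in Hconst. lra.
Qed.

Lemma deviation_from_mean N E (B Bp : mat) (Y : nat -> R) :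
  (forall i j, (i < N)%nat -> (j < N)%nat ->
     sumR E (fun g => B i g * Bp g j) = (if Nat.eqb i j then 1 else 0) - / INR N) ->
  forall i, (i < N)%nat ->
  Y i - / INR N * sumR N Y = sumR E (fun g => Bp g i * sumR N (fun j => B j g * Y j)).
Proof.
  intros HP i Hi.
  rewrite (sumR_ext E _ (fun g => sumR N (fun j => B j g * Bp g i * Y j))).
  2: { intros g Hg. rewrite <- sumR_scal_l. apply sumR_ext; intros; ring. }
  rewrite sumR_swap.
  rewrite (sumR_ext N (fun j => sumR E (fun g => B j g * Bp g i * Y j))
    (fun j => (if Nat.eqb j i then Y j else 0) - / INR N * Y j)).
  - rewrite sumR_minus, sumR_scal_l, (sumR_delta N i Y) by auto. reflexivity.
  - intros j Hj. rewrite sumR_scal_r, HP by auto. destruct (Nat.eqb j i); ring.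
Qed.

Lemma deviation_from_mean_sq_le N E q (B Bp : mat) (Y : nat -> vec) :
  (forall i j, (i < N)%nat -> (j < N)%nat ->
     sumR E (fun g => B i g * Bp g j) = (if Nat.eqb i j then 1 else 0) - / INR N) ->
  forall i, (i < N)%nat ->
  vnorm q (vsub (Y i) (fun l => / INR N * sumR N (fun j => Y j l))) ^ 2
  <= sumR E (fun g => Bp g i ^ 2) *
     sumR E (fun g => sumR q (fun l => sumR N (fun j => B j g * Y j l) ^ 2)).
Proof.
  intros HP i Hi. rewrite vnorm_sq, (sumR_swap E q), <- sumR_scal_l. apply sumR_le. intros l Hl.
  unfold vsub. rewrite (deviation_from_mean N E B Bp (fun j => Y j l) HP i Hi).
  apply cauchy_schwarz.
Qed.

(** * Block indexing *)

Lemma offs_S m i : offs m (S i) = (offs m i + m i)%nat.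
Proof. reflexivity. Qed.

Lemma offs_mono m a b : (a <= b)%nat -> (offs m a <= offs m b)%nat.
Proof. induction 1; auto. rewrite offs_S; lia. Qed.

Lemma inblk_offs m j i k : (k < m i)%nat -> inblk m j (offs m i + k) = Nat.eqb j i.
Proof.
  intros Hk. unfold inblk. destruct (Compare_dec.lt_eq_lt_dec j i) as [[Hl| ->]|Hgt].
  - pose proof (offs_mono m (S j) i Hl). rewrite offs_S in H.
    rewrite (proj2 (Nat.ltb_ge _ _)) by lia. rewrite Bool.andb_false_r.
    symmetry; apply Nat.eqb_neq; lia.
  - rewrite Nat.eqb_refl, (proj2 (Nat.leb_le _ _)), (proj2 (Nat.ltb_lt _ _)) by lia. auto.
  - pose proof (offs_mono m (S i) j Hgt). rewrite offs_S in H.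
    rewrite (proj2 (Nat.leb_gt _ _)) by lia. symmetry; apply Nat.eqb_neq; lia.
Qed.

Lemma offs_lt m N i k : (i < N)%nat -> (k < m i)%nat -> (offs m i + k < offs m N)%nat.
Proof.
  intros Hi Hk. pose proof (offs_mono m (S i) N Hi). rewrite offs_S in H. lia.
Qed.

Lemma sumR_offs m N F :
  sumR (offs m N) F = sumR N (fun i => sumR (m i) (fun k => F (offs m i + k)%nat)).
Proof.
  induction N as [|N IH]; [reflexivity|].
  rewrite offs_S, sumR_split, IH. reflexivity.
Qed.

Lemma sumR_mul a b F : sumR (a * b) F = sumR a (fun i => sumR b (fun j => F (i * b + j)%nat)).
Proof. induction a; [reflexivity|]. rewrite Nat.mul_succ_l, sumR_split, IHa. reflexivity. Qed.

Lemma sstack_offs N m s z i k : (i < N)%nat -> (k < m i)%nat ->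
  sstack N m s z (offs m i + k)%nat = s i (fun k' => z (offs m i + k')%nat) k.
Proof.
  intros Hi Hk. unfold sstack.
  rewrite (sumR_ext N _
    (fun j => if Nat.eqb j i then s i (fun k' => z (offs m i + k')%nat) k else 0)).
  - apply (sumR_delta N i (fun _ => _)); auto.
  - intros j Hj. rewrite inblk_offs by auto. destruct (Nat.eqb_spec j i) as [->|]; auto.
    f_equal. lia.
Qed.

Lemma Hg_offs q N m Bp Rm g l j k : (l < q)%nat -> (j < N)%nat -> (k < m j)%nat ->
  Hg q N m Bp Rm g l (offs m j + k)%nat = Bp g j * Rm j l k.
Proof.
  intros Hl Hj Hk. unfold Hg, Hmat, mmul, kron, blockdiag. rewrite sumR_mul.
  assert (Hdiv : forall a b, (b < q)%nat -> ((a * q + b) / q = a /\ (a * q + b) mod q = b)%nat).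
  { intros a b Hb. split; [symmetry; apply (Nat.div_unique _ _ _ b)
                          |symmetry; apply (Nat.mod_unique _ _ a)]; lia. }
  destruct (Hdiv g l Hl) as [-> ->].
  rewrite (sumR_ext N _ (fun j' => if Nat.eqb j' j then Bp g j * Rm j l k else 0)).
  - apply (sumR_delta N j (fun _ => _)); auto.
  - intros j' Hj'. rewrite (sumR_ext q _ (fun l' => if Nat.eqb l' l then
        (if Nat.eqb j' j then Bp g j * Rm j l k else 0) else 0)).
    + apply (sumR_delta q l (fun _ => _)); auto.
    + intros l' Hl'. destruct (Hdiv j' l' Hl') as [-> ->].
      rewrite inblk_offs, (proj2 (Nat.ltb_lt j' N)) by auto. simpl. unfold idm.
      destruct (Nat.eqb_spec l l'); destruct (Nat.eqb_spec l' l); destruct (Nat.eqb_spec j' j);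
        subst; try lia; try ring.
      replace (offs m j + k - offs m j)%nat with k by lia. ring.
Qed.

(** * Derivatives along trajectories *)

Lemma derivable_pt_lim_sumR k (F : nat -> R -> R) (F' : nat -> R) t :
  (forall j, (j < k)%nat -> derivable_pt_lim (F j) t (F' j)) ->
  derivable_pt_lim (fun s => sumR k (fun j => F j s)) t (sumR k F').
Proof.
  induction k as [|k IH]; intros H; simpl.
  - apply derivable_pt_lim_const.
  - apply (derivable_pt_lim_plus (fun s => sumR k (fun j => F j s)) (F k)).
    + apply IH; intros; apply H; lia.
    + apply H; lia.
Qed.

Lemma derivable_pt_lim_half_sq (f : R -> R) a t :
  derivable_pt_lim f t a -> derivable_pt_lim (fun s => f s ^ 2 / 2) t (f t * a).
Proof.
  intros H. replace (f t * a) with (/ 2 * (a * f t + f t * a)) by field.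
  apply (derivable_pt_lim_ext (fun s => / 2 * (f s * f s))); [intros; field|].
  apply derivable_pt_lim_scal, derivable_pt_lim_mult; auto.
Qed.

Definition concat_vec (n : nat) (a b : vec) : vec :=
  fun c => if Nat.ltb c n then a c else b (c - n)%nat.
Definition drop_vec (n : nat) (z : vec) : vec := fun c => z (n + c)%nat.

Lemma drop_concat_vec n a b : drop_vec n (concat_vec n a b) = b.
Proof.
  apply functional_extensionality; intros c. unfold drop_vec, concat_vec.
  rewrite (proj2 (Nat.ltb_ge _ _)) by lia. f_equal; lia.
Qed.

(* [Phi] viewed as a function of the [2n] coordinates of [concat_vec n z z']. *)
Definition joint_grad (n : nat) (D1 D2 : vec -> vec -> vec) (z : vec) (j : nat) : R :=
  if Nat.ltb j n then D1 z (drop_vec n z) j else D2 z (drop_vec n z) (j - n)%nat.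

Lemma C1pair_joint n Phi D1 D2 : C1pair n Phi D1 D2 ->
  depends_on (n + n) (fun z => Phi z (drop_vec n z)) /\
  partials (n + n) (fun z => Phi z (drop_vec n z)) (joint_grad n D1 D2) /\
  continuous_partials (n + n) (joint_grad n D1 D2).
Proof.
  intros [Hdep [Hpar Hcont]]. split; [|split].
  - intros z z' Hz. apply Hdep. intros k Hk. unfold drop_vec. split; apply Hz; lia.
  - intros z j Hj. unfold joint_grad. destruct (Nat.ltb_spec j n).
    + apply (derivable_pt_lim_ext (fun r => Phi (upd z j r) (drop_vec n z))).
      * intros r. f_equal. apply functional_extensionality; intros c; unfold drop_vec, upd.
        rewrite (proj2 (Nat.eqb_neq _ _)) by lia; auto.
      * apply (proj1 (Hpar z (drop_vec n z) j H)).
    + replace (z j) with (drop_vec n z (j - n)%nat) by (unfold drop_vec; f_equal; lia).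
      apply (derivable_pt_lim_ext (fun r => Phi z (upd (drop_vec n z) (j - n) r))).
      * intros r. apply Hdep. intros k Hk. unfold drop_vec, upd. split.
        -- rewrite (proj2 (Nat.eqb_neq k j)) by lia; auto.
        -- destruct (Nat.eqb_spec (n + k) j); destruct (Nat.eqb_spec k (j - n)); auto; lia.
      * apply (proj2 (Hpar z (drop_vec n z) (j - n)%nat ltac:(lia))).
  - intros j Hj z eps Heps. unfold joint_grad.
    assert (Hsplit : forall z' del, vnorm (n + n) (vsub z' z) < del ->
      vnorm n (vsub z' z) < del /\ vnorm n (vsub (drop_vec n z') (drop_vec n z)) < del).
    { intros z' del Hz'. split; eapply Rle_lt_trans; try apply Hz'.
      - apply vnorm_split_l.
      - apply (vnorm_split_r n n (vsub z' z)). }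
    destruct (Nat.ltb_spec j n);
      [destruct (Hcont j H z (drop_vec n z) eps Heps) as [del [Hdel Hd']]
      |destruct (Hcont (j - n)%nat ltac:(lia) z (drop_vec n z) eps Heps) as [del [Hdel Hd']]];
      exists del; split; auto; intros z' Hz'; apply Hd'; apply (Hsplit z' del Hz').
Qed.

(* The partial gradients [D1], [D2] are evaluated at [concat_vec n a b] instead of [a]:
   a vector that agrees with [a] on the meaningful coordinates. *)
Lemma C1pair_chain_rule n Phi D1 D2 (a b : R -> vec) (a' b' : vec) t :
  C1pair n Phi D1 D2 ->
  (forall c, (c < n)%nat -> derivable_pt_lim (fun s => a s c) t (a' c)) ->
  (forall c, (c < n)%nat -> derivable_pt_lim (fun s => b s c) t (b' c)) ->
  derivable_pt_lim (fun s => Phi (a s) (b s)) t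
    (dot n (D1 (concat_vec n (a t) (b t)) (b t)) a'
     + dot n (D2 (concat_vec n (a t) (b t)) (b t)) b').
Proof.
  intros HPhi Ha Hb. destruct (C1pair_joint n Phi D1 D2 HPhi) as [Hd [Hp Hc]].
  assert (Hg : forall j, (j < n + n)%nat ->
      derivable_pt_lim (fun s => concat_vec n (a s) (b s) j) t (concat_vec n a' b' j)).
  { intros j Hj. unfold concat_vec. destruct (Nat.ltb_spec j n); [apply Ha|apply Hb]; lia. }
  replace (dot n _ a' + dot n _ b') with (sumR (n + n) (fun j =>
    joint_grad n D1 D2 (concat_vec n (a t) (b t)) j * concat_vec n a' b' j)).
  - apply (derivable_pt_lim_ext (fun s => Phi (concat_vec n (a s) (b s))
                                               (drop_vec n (concat_vec n (a s) (b s))))).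
    + intros s. rewrite drop_concat_vec. apply (proj1 HPhi). intros k Hk. unfold concat_vec.
      rewrite (proj2 (Nat.ltb_lt _ _)) by auto. auto.
    + apply (chain_rule (n + n) _ _ _ _ t Hd Hp Hc Hg).
  - rewrite sumR_split. unfold joint_grad, dot. rewrite drop_concat_vec.
    f_equal; apply sumR_ext.
    + intros j Hj. unfold concat_vec. rewrite !(proj2 (Nat.ltb_lt _ _)) by auto. auto.
    + intros j Hj. unfold concat_vec. rewrite !(proj2 (Nat.ltb_ge _ _)) by lia.
      replace (n + j - n)%nat with j by lia. auto.
Qed.

Lemma lyapunov_drop (V V' Q : R -> R) a L eps :
  0 < L -> 0 < eps ->
  (forall t, a <= t -> derivable_pt_lim V t (V' t)) ->
  (forall t, a <= t -> V' t <= - Q t) ->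
  (forall t s, a <= t -> a <= s -> Rabs (Q t - Q s) <= L * Rabs (t - s)) ->
  forall t, a <= t -> Q t >= eps -> V (t + eps / (2 * L)) <= V t - eps * (eps / (2 * L)) / 2.
Proof.
  intros HLp Heps HV HV' HL t Ht HQt. set (del := eps / (2 * L)).
  assert (Hdel : 0 < del) by (apply Rdiv_lt_0_compat; lra).
  destruct (MVT_cor2 V V' t (t + del) ltac:(lra) (fun c Hc => HV c ltac:(lra))) as [c [Ec Hc]].
  assert (HQc : Q c >= eps / 2).
  { pose proof (HL c t ltac:(lra) ltac:(lra)) as Hl.
    rewrite (Rabs_right (c - t)) in Hl by lra.
    assert (L * (c - t) <= L * del) by (apply Rmult_le_compat_l; lra).
    assert (L * del = eps / 2) by (unfold del; field; lra).
    pose proof (Rle_abs (Q t - Q c)). rewrite Rabs_minus_sym in H1. lra. }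
  pose proof (HV' c ltac:(lra)). replace (t + del - t) with del in Ec by ring. nra.
Qed.

Lemma nonneg_not_unboundedly_decreasing (V : R -> R) a c :
  0 < c -> (forall t, a <= t -> 0 <= V t) ->
  ~ (forall k, exists T, a <= T /\ V T <= V a - INR k * c).
Proof.
  intros Hc HV0 Hk.
  destruct (archimed (V a / c)) as [Ha _].
  assert (Hup : (0 <= up (V a / c))%Z).
  { apply le_IZR. pose proof (HV0 a ltac:(lra)).
    assert (0 <= V a / c) by (apply Rmult_le_pos; [lra|apply Rlt_le, Rinv_0_lt_compat; lra]). lra. }
  destruct (Hk (Z.to_nat (up (V a / c)))) as [T [HT HVT]].
  rewrite INR_IZR_INZ, Znat.Z2Nat.id in HVT by auto.
  pose proof (HV0 T HT).
  apply (Rmult_lt_compat_r c) in Ha; auto. unfold Rdiv at 1 in Ha.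
  rewrite Rmult_assoc, Rinv_l in Ha by lra. lra.
Qed.

(* Barbalat-type lemma: every excursion [Q t >= eps] of a uniformly Lipschitz [Q] costs the
   nonnegative [V] a fixed amount, so there can only be finitely many. *)
Lemma lyapunov_barbalat (V V' Q : R -> R) a LQ :
  (forall t, a <= t -> derivable_pt_lim V t (V' t)) ->
  (forall t, a <= t -> V' t <= - Q t) ->
  (forall t, a <= t -> 0 <= V t) ->
  (forall t, a <= t -> 0 <= Q t) ->
  (forall t s, a <= t -> a <= s -> Rabs (Q t - Q s) <= LQ * Rabs (t - s)) ->
  forall eps, eps > 0 -> exists T, forall t, t >= T -> Q t < eps.
Proof.
  intros HV HV' HV0 HQ0 HL eps Heps. apply NNPP; intros Hn.
  assert (Hinf : forall T, exists t, t >= T /\ Q t >= eps).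
  { intros T. apply NNPP; intros H2. apply Hn. exists T. intros t Ht.
    apply Rnot_le_lt. intros H3. apply H2. exists t; split; lra. }
  set (L := Rabs LQ + 1).
  assert (HLp : 0 < L) by (unfold L; pose proof (Rabs_pos LQ); lra).
  assert (HL' : forall t s, a <= t -> a <= s -> Rabs (Q t - Q s) <= L * Rabs (t - s)).
  { intros t s Ht Hs. eapply Rle_trans; [apply HL; auto|]. apply Rmult_le_compat_r;
      [apply Rabs_pos|unfold L; pose proof (Rle_abs LQ); lra]. }
  set (del := eps / (2 * L)).
  assert (Hdel : 0 < del) by (apply Rdiv_lt_0_compat; lra).
  assert (Hmono : forall r s, a <= r -> r <= s -> V s <= V r).
  { apply (nonincreasing_of_deriv_nonpos V V' a HV).
    intros t Ht. pose proof (HV' t Ht). pose proof (HQ0 t Ht). lra. }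
  apply (nonneg_not_unboundedly_decreasing V a (eps * del / 2)); auto.
  { apply Rdiv_lt_0_compat; [nra|lra]. }
  induction k as [|k [T [HT HVT]]]; [exists a; simpl; split; lra|].
  destruct (Hinf T) as [t [Ht HQt]]. exists (t + del). split; [lra|].
  pose proof (lyapunov_drop V V' Q a L eps HLp Heps HV HV' HL' t ltac:(lra) HQt).
  pose proof (Hmono T t ltac:(lra) ltac:(lra)). rewrite S_INR. fold del in H. lra.
Qed.

Lemma exosystem_bounded mi si (w : R -> vec) : exo_ok mi si ->
  (forall k t, (k < mi)%nat -> 0 < t -> derivable_pt_lim (fun t => w t k) t (si (w t) k)) ->
  forall t k, 1 <= t -> (k < mi)%nat -> Rabs (w t k) <= vnorm mi (w 1).
Proof.
  intros [_ [Hs0 Hmon]] Hw t k Ht Hk.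
  set (W := fun t => sumR mi (fun k => w t k ^ 2 / 2)).
  assert (Hle : W t <= W 1).
  { apply (nonincreasing_of_deriv_nonpos W (fun t => sumR mi (fun k => w t k * si (w t) k)) 1);
      [intros t' Ht'..|lra|lra].
    - apply derivable_pt_lim_sumR. intros j Hj. apply derivable_pt_lim_half_sq, Hw; auto; lra.
    - pose proof (Hmon (w t') (fun _ => 0)) as Hm. unfold dot, vsub in Hm.
      rewrite (sumR_ext mi _ (fun j => (w t' j - 0) * (si (w t') j - si (fun _ => 0) j))); auto.
      intros j Hj. rewrite Hs0 by auto. ring. }
  eapply Rle_trans; [apply (coord_le_vnorm mi (w t) k Hk)|]. apply sqrt_le_1_alt.
  unfold W in Hle.
  rewrite (sumR_ext mi (fun k => w t k ^ 2 / 2) (fun k => / 2 * w t k ^ 2)) in Hle by (intros; field).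
  rewrite (sumR_ext mi (fun k => w 1 k ^ 2 / 2) (fun k => / 2 * w 1 k ^ 2)) in Hle by (intros; field).
  rewrite !sumR_scal_l in Hle. lra.
Qed.

Lemma bounded_on_box_family k J (G : nat -> vec -> R) :
  (forall j, (j < J)%nat -> locally_bounded k (G j)) ->
  (forall j z, (j < J)%nat -> 0 <= G j z) ->
  forall M, exists K, forall z, in_box k M z -> forall j, (j < J)%nat -> G j z <= K.
Proof.
  intros Hloc Hpos M.
  destruct (bounded_on_box k _ (locally_bounded_sumR k J G Hloc) M) as [K HK].
  exists K. intros z Hz j Hj. eapply Rle_trans; [|apply (HK z Hz)].
  apply (sumR_term_le J (fun j => G j z)); auto.
Qed.

(** * Consequences of the regularity assumptions *)

Lemma dist3_agree n q x u d x' u' d' :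
  (forall k, (k < n)%nat -> x k = x' k) -> (forall l, (l < q)%nat -> u l = u' l) ->
  (forall l, (l < q)%nat -> d l = d' l) -> dist3 n q x u d x' u' d' = 0.
Proof.
  intros Hx Hu Hd. unfold dist3.
  rewrite (vnorm_zero n), (vnorm_zero q (vsub u u')), (vnorm_zero q (vsub d d'));
    try (intros j Hj; unfold vsub; rewrite ?Hx, ?Hu, ?Hd by auto; ring).
  replace (0 ^ 2 + 0 ^ 2 + 0 ^ 2) with 0 by ring. apply sqrt_0.
Qed.

(* The Lipschitz bound at distance zero shows that [f] only reads meaningful coordinates. *)
Lemma locLip_f_depends n q f : locLip_f n q f -> forall x x' u u' d d',
  (forall k, (k < n)%nat -> x k = x' k) -> (forall l, (l < q)%nat -> u l = u' l) ->
  (forall l, (l < q)%nat -> d l = d' l) -> forall k, (k < n)%nat -> f x u d k = f x' u' d' k.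
Proof.
  intros Hf x x' u u' d d' Hx Hu Hd k Hk.
  destruct (Hf x u d) as [rad [Hrad [L HL]]].
  assert (E0 : dist3 n q x u d x u d = 0) by (apply dist3_agree; auto).
  assert (E1 : dist3 n q x u d x' u' d' = 0) by (apply dist3_agree; auto).
  assert (E2 : dist3 n q x' u' d' x u d = 0) by (apply dist3_agree; intros; symmetry; auto).
  specialize (HL x u d x' u' d' ltac:(lra) ltac:(lra)). rewrite E1, Rmult_0_r in HL.
  pose proof (coord_zero_of_vnorm n _ k HL Hk). unfold vsub in H; lra.
Qed.

Lemma dist3_pack n q (z z0 : vec) :
  dist3 n q z (fun c => z (n + c)%nat) (fun c => z (n + q + c)%nat)
            z0 (fun c => z0 (n + c)%nat) (fun c => z0 (n + q + c)%nat)
  = vnorm (n + q + q) (vsub z z0).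
Proof.
  unfold dist3. rewrite !vnorm_sq. unfold vnorm. f_equal.
  rewrite (sumR_split (n + q) q), (sumR_split n q). reflexivity.
Qed.

Lemma locLip_f_bounded_on_box n q f : locLip_f n q f -> forall M, exists K,
  forall x u d, in_box n M x -> in_box q M u -> in_box q M d -> in_box n K (f x u d).
Proof.
  intros Hf M.
  set (unpack := fun (z : vec) => f z (fun c => z (n + c)%nat) (fun c => z (n + q + c)%nat)).
  destruct (bounded_on_box_family (n + q + q) n (fun k z => Rabs (unpack z k))) with (M := M)
    as [K HK].
  - intros k Hk z0. destruct (Hf z0 (fun c => z0 (n + c)%nat) (fun c => z0 (n + q + c)%nat))
      as [rad [Hrad [L HL]]].
    exists rad, (Rabs (unpack z0 k) + Rabs L * rad). split; auto.
    intros z Hz. rewrite <- dist3_pack in Hz.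
    assert (H0 : dist3 n q z0 (fun c => z0 (n + c)%nat) (fun c => z0 (n + q + c)%nat)
                 z0 (fun c => z0 (n + c)%nat) (fun c => z0 (n + q + c)%nat) < rad)
      by (rewrite dist3_agree; auto).
    specialize (HL _ _ _ _ _ _ Hz H0). rewrite dist3_pack in HL, Hz.
    pose proof (coord_le_vnorm n (vsub (unpack z) (unpack z0)) k Hk) as Hc.
    assert (L * vnorm (n + q + q) (vsub z z0) <= Rabs L * rad).
    { pose proof (vnorm_nonneg (n + q + q) (vsub z z0)). pose proof (Rabs_pos L).
      pose proof (Rle_abs L). nra. }
    unfold vsub at 1 in Hc. fold (unpack z) (unpack z0) in HL.
    replace (unpack z k) with ((unpack z k - unpack z0 k) + unpack z0 k) by ring.
    eapply Rle_trans; [apply Rabs_triang|]. lra.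
  - intros; apply Rabs_pos.
  - exists K. intros x u d Hx Hu Hd k Hk.
    set (z := fun c => if Nat.ltb c n then x c
                       else if Nat.ltb c (n + q) then u (c - n)%nat else d (c - n - q)%nat).
    replace (f x u d k) with (unpack z k).
    + apply HK; auto. intros c Hc. unfold z.
      destruct (Nat.ltb_spec c n); [apply Hx; auto|].
      destruct (Nat.ltb_spec c (n + q)); [apply Hu|apply Hd]; lia.
    + apply (locLip_f_depends n q f Hf); auto; intros j Hj; unfold z.
      * rewrite (proj2 (Nat.ltb_lt _ _)) by auto. auto.
      * rewrite (proj2 (Nat.ltb_ge _ _)), (proj2 (Nat.ltb_lt _ _)) by lia. f_equal; lia.
      * rewrite (proj2 (Nat.ltb_ge _ _)), (proj2 (Nat.ltb_ge _ _)) by lia. f_equal; lia.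
Qed.

(** * The closed loop *)

Section ClosedLoop.

Variables (n q N E : nat) (m : nat -> nat) (f : vec -> vec -> vec -> vec) (h : vec -> vec)
  (sigma : R) (s : nat -> vec -> vec) (Rm : nat -> mat) (B Bp : mat) (delta : nat -> R)
  (x w zeta : nat -> R -> vec) (kappa : nat -> R -> R).
Variables (Dh : vec -> nat -> nat -> R) (Phi : vec -> vec -> R) (D1 D2 : vec -> vec -> vec).

Hypothesis Hf : locLip_f n q f.
Hypothesis Hh_dep : forall z z', (forall k, (k < n)%nat -> z k = z' k) ->
  forall l, (l < q)%nat -> h z l = h z' l.
Hypothesis Hh_der : forall z l j, (l < q)%nat -> (j < n)%nat ->
  derivable_pt_lim (fun a => h (upd z j a) l) (z j) (Dh z l j).
Hypothesis Hh_cont : forall l j, (l < q)%nat -> (j < n)%nat -> forall z eps, eps > 0 ->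
  exists del, del > 0 /\ forall z', vnorm n (vsub z' z) < del -> Rabs (Dh z' l j - Dh z l j) < eps.
Hypothesis HPhi : C1pair n Phi D1 D2.
Hypothesis HPhi_nonneg : forall z z', 0 <= Phi z z'.
Hypothesis Hdiss : forall z z' a a' b b',
  dot n (D1 z z') (f z a b) + dot n (D2 z z') (f z' a' b')
  <= sigma * (vnorm q (vsub (h z) (h z'))) ^ 2
     + dot q (vsub (h z) (h z')) (fun l => (a l + b l) - (a' l + b' l)).
Hypothesis Hexo : forall i, (i < N)%nat -> exo_ok (m i) (s i).
Hypothesis HN : (0 < N)%nat.
Hypothesis Hcol : forall g, (g < E)%nat -> sumR N (fun k => B k g) = 0.
Hypothesis HP : forall i j, (i < N)%nat -> (j < N)%nat ->
  sumR E (fun g => B i g * Bp g j) = (if Nat.eqb i j then 1 else 0) - / INR N.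
Hypothesis Hdelta : forall g, (g < E)%nat -> delta g > 0.
Hypothesis Hw : forall i k t, (i < N)%nat -> (k < m i)%nat -> 0 < t ->
  derivable_pt_lim (fun t => w i t k) t (s i (w i t) k).
Hypothesis Hx : forall i k t, (i < N)%nat -> (k < n)%nat -> 0 < t ->
  derivable_pt_lim (fun t => x i t k) t
    (f (x i t) (uin q N E m Bp Rm B h x zeta kappa i t) (din m Rm w i t) k).
Hypothesis Hzeta : forall g c t, (g < E)%nat -> (c < offs m N)%nat -> 0 < t ->
  derivable_pt_lim (fun t => zeta g t c) t
    (sstack N m s (zeta g t) c + sumR q (fun l => Hg q N m Bp Rm g l c * rho N B h x g t l)).
Hypothesis Hkappa : forall g t, (g < E)%nat -> 0 < t ->
  derivable_pt_lim (kappa g) t (delta g * dot q (rho N B h x g t) (rho N B h x g t)).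

Local Notation y i t := (h (x i t)).
Local Notation r g t := (rho N B h x g t).
Local Notation u i t := (uin q N E m Bp Rm B h x zeta kappa i t).
Local Notation d i t := (din m Rm w i t).
Local Notation xdot i t := (f (x i t) (u i t) (d i t)).

(* [err g i] is the error of the copy of the exosystem [i] kept by the controller of edge [g]. *)
Definition err g i k t := zeta g t (offs m i + k)%nat - w i t k.
Definition err_dot g i k t :=
  s i (fun k' => zeta g t (offs m i + k')%nat) k
  + sumR q (fun l => Bp g i * Rm i l k * r g t l) - s i (w i t) k.
(* [v_g] with the exact disturbance estimate subtracted. *)
Definition vtilde g l t :=
  sumR N (fun j => Bp g j * sumR (m j) (fun k => Rm j l k * err g j k t)) + kappa g t * r g t l.
Definition ctilde i l t := sumR E (fun g => B i g * vtilde g l t).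

Definition edge_energy t := sumR E (fun g => sumR q (fun l => r g t l ^ 2)).
Definition pinv_spread := sumR N (fun i => sumR N (fun j => sumR E (fun g => (Bp g i - Bp g j) ^ 2))).
(* The value the adaptive gains have to exceed. *)
Definition gain_level := (Rabs sigma * pinv_spread + 1) / (2 * INR N).

Definition pair_dot i j t :=
  dot n (D1 (concat_vec n (x i t) (x j t)) (x j t)) (xdot i t)
  + dot n (D2 (concat_vec n (x i t) (x j t)) (x j t)) (xdot j t).

Definition lyap t :=
  sumR N (fun i => sumR N (fun j => Phi (x i t) (x j t)))
  + 2 * INR N * sumR E (fun g => sumR N (fun i => sumR (m i) (fun k => err g i k t ^ 2 / 2)))
  + 2 * INR N * sumR E (fun g => / delta g * ((kappa g t - gain_level) ^ 2 / 2)).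
Definition lyap_dot t :=
  sumR N (fun i => sumR N (fun j => pair_dot i j t))
  + 2 * INR N * sumR E (fun g => sumR N (fun i =>
      sumR (m i) (fun k => err g i k t * err_dot g i k t)))
  + 2 * INR N * sumR E (fun g =>
      / delta g * ((kappa g t - gain_level) * (delta g * dot q (r g t) (r g t)))).

Lemma vout_decomp g l t : (l < q)%nat ->
  vout q N m Bp Rm B h x zeta kappa g t l = vtilde g l t + sumR N (fun j => Bp g j * d j t l).
Proof.
  intros Hl. unfold vout, vtilde. rewrite sumR_offs.
  rewrite (sumR_ext N _ (fun j => Bp g j * sumR (m j) (fun k => Rm j l k * err g j k t)
                                  + Bp g j * d j t l)).
  - rewrite sumR_plus. ring.
  - intros j Hj. unfold err, din. rewrite <- Rmult_plus_distr_l, <- sumR_plus, <- sumR_scal_l.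
    apply sumR_ext. intros k Hk. rewrite Hg_offs by auto. ring.
Qed.

Lemma input_plus_disturbance i l t : (i < N)%nat -> (l < q)%nat ->
  u i t l + d i t l = / INR N * sumR N (fun j => d j t l) - ctilde i l t.
Proof.
  intros Hi Hl. unfold uin, ctilde.
  rewrite (sumR_ext E (fun g => B i g * vout q N m Bp Rm B h x zeta kappa g t l)
           (fun g => B i g * vtilde g l t + sumR N (fun j => B i g * Bp g j * d j t l))).
  2: { intros g Hg. rewrite vout_decomp, Rmult_plus_distr_l, <- sumR_scal_l by auto. f_equal.
       apply sumR_ext; intros; ring. }
  rewrite sumR_plus, (sumR_swap E N).
  rewrite (sumR_ext N (fun j => sumR E (fun g => B i g * Bp g j * d j t l))
             (fun j => (if Nat.eqb j i then d j t l else 0) - / INR N * d j t l)).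
  2: { intros j Hj. rewrite sumR_scal_r, HP by auto. rewrite Nat.eqb_sym.
       destruct (Nat.eqb j i); ring. }
  rewrite sumR_minus, sumR_scal_l, (sumR_delta N i (fun j => d j t l)) by auto. ring.
Qed.


Lemma pair_dissipation i j t : (i < N)%nat -> (j < N)%nat ->
  pair_dot i j t <= sigma * sumR q (fun l => (y i t l - y j t l) ^ 2)
                    - sumR q (fun l => (y i t l - y j t l) * (ctilde i l t - ctilde j l t)).
Proof.
  intros Hi Hj. set (p := concat_vec n (x i t) (x j t)).
  assert (Hp : forall k, (k < n)%nat -> p k = x i t k).
  { intros k Hk. unfold p, concat_vec. rewrite (proj2 (Nat.ltb_lt _ _)) by auto. auto. }
  assert (Hhp : forall l, (l < q)%nat -> h p l = y i t l) by (intros; apply Hh_dep; auto).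
  pose proof (Hdiss p (x j t) (u i t) (u j t) (d i t) (d j t)) as H.
  replace (dot n (D1 p (x j t)) (f p (u i t) (d i t))) with (dot n (D1 p (x j t)) (xdot i t)) in H.
  2: { apply sumR_ext. intros k Hk. f_equal. symmetry.
       apply (locLip_f_depends n q f Hf); auto. }
  rewrite vnorm_sq in H. unfold pair_dot. fold p.
  replace (sumR q (fun l => vsub (h p) (h (x j t)) l ^ 2))
    with (sumR q (fun l => (y i t l - y j t l) ^ 2)) in H.
  2: { apply sumR_ext. intros l Hl. unfold vsub. rewrite Hhp; auto. }
  replace (dot q (vsub (h p) (h (x j t))) (fun l => u i t l + d i t l - (u j t l + d j t l)))
    with (- sumR q (fun l => (y i t l - y j t l) * (ctilde i l t - ctilde j l t))) in H.
  2: { unfold dot. rewrite <- (Rmult_1_l (sumR q _)), Ropp_mult_distr_l, <- sumR_scal_l.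
       apply sumR_ext. intros l Hl. unfold vsub. rewrite Hhp, !input_plus_disturbance by auto.
       ring. }
  lra.
Qed.

Lemma coupling_sum t :
  sumR N (fun i => sumR N (fun j =>
    sumR q (fun l => (y i t l - y j t l) * (ctilde i l t - ctilde j l t))))
  = 2 * INR N * sumR E (fun g => sumR q (fun l => r g t l * vtilde g l t)).
Proof.
  rewrite (sumR_ext N _ (fun i => sumR q (fun l => sumR N (fun j =>
    (y i t l - y j t l) * (ctilde i l t - ctilde j l t))))) by (intros; apply sumR_swap).
  rewrite sumR_swap, (sumR_swap E q), <- sumR_scal_l. apply sumR_ext. intros l Hl.
  rewrite (sumR_pair_diff N (fun i => y i t l) (fun i => ctilde i l t)).
  assert (Hc : sumR N (fun i => ctilde i l t) = 0).
  { unfold ctilde. rewrite sumR_swap, (sumR_ext E _ (fun _ => 0)); [apply sumR_zero|].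
    intros g Hg. rewrite sumR_scal_r, Hcol by auto. ring. }
  assert (Hyc : sumR N (fun i => y i t l * ctilde i l t) = sumR E (fun g => r g t l * vtilde g l t)).
  { unfold ctilde. rewrite (sumR_ext N _ (fun i => sumR E (fun g => B i g * y i t l * vtilde g l t)))
      by (intros; rewrite <- sumR_scal_l; apply sumR_ext; intros; ring).
    rewrite sumR_swap. apply sumR_ext. intros g Hg. rewrite sumR_scal_r. reflexivity. }
  rewrite Hc, Hyc. ring.
Qed.

Lemma output_diff_rho i j l t : (i < N)%nat -> (j < N)%nat ->
  y i t l - y j t l = sumR E (fun g => (Bp g i - Bp g j) * r g t l).
Proof.
  intros Hi Hj.
  pose proof (deviation_from_mean N E B Bp (fun k => y k t l) HP i Hi) as Ei.
  pose proof (deviation_from_mean N E B Bp (fun k => y k t l) HP j Hj) as Ej.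
  rewrite (sumR_ext E _ (fun g => Bp g i * r g t l - Bp g j * r g t l)) by (intros; ring).
  rewrite sumR_minus. unfold rho. simpl in Ei, Ej. lra.
Qed.

Lemma output_diff_sq_le i j t : (i < N)%nat -> (j < N)%nat ->
  sumR q (fun l => (y i t l - y j t l) ^ 2)
  <= sumR E (fun g => (Bp g i - Bp g j) ^ 2) * edge_energy t.
Proof.
  intros Hi Hj. unfold edge_energy. rewrite (sumR_swap E q), <- sumR_scal_l.
  apply sumR_le; intros l Hl. rewrite output_diff_rho by auto. apply cauchy_schwarz.
Qed.

Lemma sigma_term_le t :
  sumR N (fun i => sumR N (fun j => sigma * sumR q (fun l => (y i t l - y j t l) ^ 2)))
  <= Rabs sigma * pinv_spread * edge_energy t.
Proof.
  unfold pinv_spread. rewrite (Rmult_comm (Rabs sigma)), Rmult_assoc, <- sumR_scal_r.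
  apply sumR_le; intros i Hi. rewrite <- sumR_scal_r. apply sumR_le; intros j Hj.
  assert (0 <= sumR q (fun l => (y i t l - y j t l) ^ 2))
    by (apply sumR_nonneg; intros; apply pow2_ge_0).
  pose proof (output_diff_sq_le i j t Hi Hj). pose proof (Rle_abs sigma). pose proof (Rabs_pos sigma).
  nra.
Qed.

Lemma err_term_le t :
  sumR E (fun g => sumR N (fun i => sumR (m i) (fun k => err g i k t * err_dot g i k t)))
  <= sumR E (fun g => sumR q (fun l => r g t l *
       sumR N (fun j => Bp g j * sumR (m j) (fun k => Rm j l k * err g j k t)))).
Proof.
  apply sumR_le. intros g Hg.
  rewrite (sumR_ext N _ (fun i =>
      dot (m i) (vsub (fun k => zeta g t (offs m i + k)%nat) (w i t))
                (vsub (s i (fun k => zeta g t (offs m i + k)%nat)) (s i (w i t)))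
      + sumR q (fun l => r g t l * (Bp g i * sumR (m i) (fun k => Rm i l k * err g i k t))))).
  - rewrite sumR_plus, (sumR_swap N q).
    assert (Hmon : sumR N (fun i => dot (m i) (vsub (fun k => zeta g t (offs m i + k)%nat) (w i t))
        (vsub (s i (fun k => zeta g t (offs m i + k)%nat)) (s i (w i t)))) <= 0).
    { rewrite <- (sumR_zero N). apply sumR_le. intros i Hi. apply (Hexo i Hi). }
    rewrite (sumR_ext q _ (fun l => r g t l *
      sumR N (fun j => Bp g j * sumR (m j) (fun k => Rm j l k * err g j k t)))); [lra|].
    intros l Hl. apply sumR_scal_l.
  - intros i Hi. unfold dot, vsub. cbv beta.
    rewrite (sumR_ext q (fun l => r g t l * (Bp g i * sumR (m i) (fun k => Rm i l k * err g i k t)))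
                        (fun l => sumR (m i) (fun k => err g i k t * (Bp g i * Rm i l k * r g t l))))
      by (intros; rewrite <- !sumR_scal_l; apply sumR_ext; intros; ring).
    rewrite (sumR_swap q (m i)), <- sumR_plus. apply sumR_ext. intros k Hk.
    unfold err_dot, err. rewrite sumR_scal_l. ring.
Qed.

Lemma gain_term_eq t :
  sumR E (fun g => / delta g * ((kappa g t - gain_level) * (delta g * dot q (r g t) (r g t))))
  = sumR E (fun g => kappa g t * sumR q (fun l => r g t l ^ 2)) - gain_level * edge_energy t.
Proof.
  unfold edge_energy. rewrite <- sumR_scal_l, <- sumR_minus. apply sumR_ext. intros g Hg.
  pose proof (Hdelta g Hg). unfold dot.
  rewrite (sumR_ext q (fun l => r g t l * r g t l) (fun l => r g t l ^ 2)) by (intros; ring).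
  field. lra.
Qed.

Lemma lyap_dot_le t : lyap_dot t <= - edge_energy t.
Proof.
  assert (Hpairs : sumR N (fun i => sumR N (fun j => pair_dot i j t))
      <= Rabs sigma * pinv_spread * edge_energy t
         - 2 * INR N * sumR E (fun g => sumR q (fun l => r g t l * vtilde g l t))).
  { rewrite <- coupling_sum. pose proof (sigma_term_le t).
    enough (sumR N (fun i => sumR N (fun j => pair_dot i j t))
      <= sumR N (fun i => sumR N (fun j => sigma * sumR q (fun l => (y i t l - y j t l) ^ 2)))
         - sumR N (fun i => sumR N (fun j =>
             sumR q (fun l => (y i t l - y j t l) * (ctilde i l t - ctilde j l t))))) by lra.
    rewrite <- sumR_minus. apply sumR_le. intros i Hi. rewrite <- sumR_minus.
    apply sumR_le. intros j Hj. apply pair_dissipation; auto. }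
  assert (Hsplit : sumR E (fun g => sumR q (fun l => r g t l * vtilde g l t))
      = sumR E (fun g => sumR q (fun l => r g t l *
          sumR N (fun j => Bp g j * sumR (m j) (fun k => Rm j l k * err g j k t))))
        + sumR E (fun g => kappa g t * sumR q (fun l => r g t l ^ 2))).
  { rewrite <- sumR_plus. apply sumR_ext. intros g Hg. rewrite <- sumR_scal_l, <- sumR_plus.
    apply sumR_ext. intros l Hl. unfold vtilde. ring. }
  assert (HN' : 0 < INR N) by (apply lt_0_INR; auto).
  assert (Hlevel : 2 * INR N * (gain_level * edge_energy t)
                   = (Rabs sigma * pinv_spread + 1) * edge_energy t)
    by (unfold gain_level; field; lra).
  pose proof (Rmult_le_compat_l (2 * INR N) _ _ ltac:(lra) (err_term_le t)).
  unfold lyap_dot. rewrite gain_term_eq. rewrite Hsplit in Hpairs.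
  rewrite Rmult_minus_distr_l, Hlevel. rewrite Rmult_plus_distr_l in Hpairs. lra.
Qed.

Lemma lyap_derivative t : 0 < t -> derivable_pt_lim lyap t (lyap_dot t).
Proof.
  intros Ht. unfold lyap, lyap_dot.
  apply derivable_pt_lim_plus; [apply derivable_pt_lim_plus|].
  - apply derivable_pt_lim_sumR; intros i Hi. apply derivable_pt_lim_sumR; intros j Hj.
    apply (C1pair_chain_rule n Phi D1 D2 (x i) (x j)); auto; intros c Hc; apply Hx; auto.
  - apply derivable_pt_lim_scal. apply derivable_pt_lim_sumR; intros g HgE.
    apply derivable_pt_lim_sumR; intros i Hi. apply derivable_pt_lim_sumR; intros k Hk.
    apply derivable_pt_lim_half_sq. unfold err.
    replace (err_dot g i k t) with (sstack N m s (zeta g t) (offs m i + k)%nat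
        + sumR q (fun l => Hg q N m Bp Rm g l (offs m i + k)%nat * r g t l) - s i (w i t) k).
    + apply derivable_pt_lim_minus; [apply Hzeta|apply Hw]; auto. apply offs_lt; auto.
    + unfold err_dot. rewrite sstack_offs by auto. f_equal. f_equal. apply sumR_ext. intros l Hl.
      rewrite Hg_offs by auto. ring.
  - apply derivable_pt_lim_scal. apply derivable_pt_lim_sumR; intros g HgE.
    apply derivable_pt_lim_scal, (derivable_pt_lim_half_sq (fun s => kappa g s - gain_level)).
    replace (delta g * dot q (r g t) (r g t)) with (delta g * dot q (r g t) (r g t) - 0) by ring.
    apply derivable_pt_lim_minus; [apply Hkappa; auto|apply derivable_pt_lim_const].
Qed.

Lemma lyap_nonneg t : 0 <= lyap t.
Proof.
  unfold lyap. assert (HN' : 0 <= 2 * INR N) by (pose proof (pos_INR N); lra).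
  assert (0 <= sumR N (fun i => sumR N (fun j => Phi (x i t) (x j t))))
    by (apply sumR_nonneg; intros; apply sumR_nonneg; intros; apply HPhi_nonneg).
  assert (0 <= sumR E (fun g => sumR N (fun i => sumR (m i) (fun k => err g i k t ^ 2 / 2)))).
  { apply sumR_nonneg; intros; apply sumR_nonneg; intros; apply sumR_nonneg; intros.
    pose proof (pow2_ge_0 (err j j0 j1 t)); lra. }
  assert (0 <= sumR E (fun g => / delta g * ((kappa g t - gain_level) ^ 2 / 2))).
  { apply sumR_nonneg; intros g Hg. apply Rmult_le_pos.
    - apply Rlt_le, Rinv_0_lt_compat, Hdelta; auto.
    - pose proof (pow2_ge_0 (kappa g t - gain_level)); lra. }
  pose proof (Rmult_le_pos _ _ HN' H0). pose proof (Rmult_le_pos _ _ HN' H1). lra.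
Qed.

Variable M0 : R.
Hypothesis Hbdd : forall t, 0 <= t ->
  (forall i k, (i < N)%nat -> (k < n)%nat -> Rabs (x i t k) <= M0) /\
  (forall g c, (g < E)%nat -> (c < offs m N)%nat -> Rabs (zeta g t c) <= M0) /\
  (forall g, (g < E)%nat -> Rabs (kappa g t) <= M0).

Lemma x_in_box t i : 0 <= t -> (i < N)%nat -> in_box n (Rabs M0) (x i t).
Proof.
  intros Ht Hi k Hk. eapply Rle_trans; [apply (proj1 (Hbdd t Ht)); auto|apply Rle_abs].
Qed.

Lemma outputs_bounded : exists K, 0 <= K /\
  forall t i l, 0 <= t -> (i < N)%nat -> (l < q)%nat -> Rabs (y i t l) <= K.
Proof.
  destruct (bounded_on_box_family n q (fun l z => Rabs (h z l))) with (M := Rabs M0) as [K HK].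
  - intros l Hl. apply (locally_bounded_C1 n (fun z => h z l) (fun z => Dh z l)).
    + intros z z' Hz. apply Hh_dep; auto.
    + intros z j Hj. apply Hh_der; auto.
    + intros j Hj z eps Heps. apply Hh_cont; auto.
  - intros; apply Rabs_pos.
  - exists (Rabs K). split; [apply Rabs_pos|]. intros t i l Ht Hi Hl.
    eapply Rle_trans; [apply HK; [apply x_in_box|]; auto|apply Rle_abs].
Qed.

Lemma output_gradients_bounded : exists K, 0 <= K /\ forall t i l k,
  0 <= t -> (i < N)%nat -> (l < q)%nat -> (k < n)%nat -> Rabs (Dh (x i t) l k) <= K.
Proof.
  destruct (bounded_on_box_family n q (fun l z => sumR n (fun k => Rabs (Dh z l k))))
    with (M := Rabs M0) as [K HK].
  - intros l Hl. apply locally_bounded_sumR. intros k Hk.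
    apply locally_bounded_of_continuous. apply Hh_cont; auto.
  - intros; apply sumR_nonneg; intros; apply Rabs_pos.
  - exists (Rabs K). split; [apply Rabs_pos|]. intros t i l k Ht Hi Hl Hk.
    apply Rle_trans with (sumR n (fun k => Rabs (Dh (x i t) l k))).
    + apply (sumR_term_le n (fun k => Rabs (Dh (x i t) l k)) k); auto; intros; apply Rabs_pos.
    + eapply Rle_trans; [apply HK; [apply x_in_box|]; auto|apply Rle_abs].
Qed.

Lemma rho_bounded : exists K, 0 <= K /\
  forall t g l, 0 <= t -> (g < E)%nat -> (l < q)%nat -> Rabs (r g t l) <= K.
Proof.
  destruct outputs_bounded as [Ky [HKy Hy]].
  destruct (bounded_finite E (fun g => sumR N (fun j => Rabs (B j g)))) as [KB [HKB HB]].
  exists (KB * Ky). split; [apply Rmult_le_pos; auto|]. intros t g l Ht Hg Hl.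
  eapply Rle_trans; [apply Rabs_sumR_mult_le; intros; apply Hy; eauto|].
  apply Rmult_le_compat_r; auto. eapply Rle_trans; [apply Rle_abs|apply HB; auto].
Qed.

Lemma disturbances_bounded : exists K, 0 <= K /\
  forall t i l, 1 <= t -> (i < N)%nat -> (l < q)%nat -> Rabs (d i t l) <= K.
Proof.
  destruct (bounded_finite N (fun i => vnorm (m i) (w i 1))) as [Kw [HKw Hwb]].
  destruct (bounded_table N q (fun i l => sumR (m i) (fun k => Rabs (Rm i l k)))) as [KR [HKR HR]].
  exists (KR * Kw). split; [apply Rmult_le_pos; auto|]. intros t i l Ht Hi Hl.
  eapply Rle_trans; [apply Rabs_sumR_mult_le|].
  - intros k Hk. eapply Rle_trans.
    + apply (exosystem_bounded (m i) (s i) (w i)); auto.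
    + eapply Rle_trans; [apply Rle_abs|apply Hwb; auto].
  - apply Rmult_le_compat_r; auto. eapply Rle_trans; [apply Rle_abs|apply HR; auto].
Qed.

Lemma inputs_bounded : exists K, 0 <= K /\
  forall t i l, 0 <= t -> (i < N)%nat -> (l < q)%nat -> Rabs (u i t l) <= K.
Proof.
  destruct rho_bounded as [Kr [HKr Hr]].
  destruct (bounded_table E q (fun g l => sumR (offs m N) (fun c => Rabs (Hg q N m Bp Rm g l c))))
    as [KH [HKH HH]].
  destruct (bounded_finite N (fun i => sumR E (fun g => Rabs (B i g)))) as [KB [HKB HB]].
  set (KM := Rabs M0). assert (HKM : 0 <= KM) by apply Rabs_pos.
  exists (KB * (KH * KM + KM * Kr)). split; [apply Rmult_le_pos; nra|].
  intros t i l Ht Hi Hl. destruct (Hbdd t Ht) as [_ [Hz Hk]].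
  unfold uin. rewrite Rabs_Ropp.
  apply Rle_trans with (sumR E (fun g => Rabs (B i g)) * (KH * KM + KM * Kr)).
  - apply Rabs_sumR_mult_le. intros g HgE. unfold vout.
    eapply Rle_trans; [apply Rabs_triang|]. apply Rplus_le_compat.
    + eapply Rle_trans; [apply Rabs_sumR_mult_le|].
      * intros c Hc. eapply Rle_trans; [apply Hz; auto|apply Rle_abs].
      * apply Rmult_le_compat_r; auto. eapply Rle_trans; [apply Rle_abs|apply HH; auto].
    + apply Rabs_mult_le; [|auto]. eapply Rle_trans; [apply Hk; auto|apply Rle_abs].
  - apply Rmult_le_compat_r; [nra|]. eapply Rle_trans; [apply Rle_abs|apply HB; auto].
Qed.

Lemma velocities_bounded : exists K, 0 <= K /\
  forall t i k, 1 <= t -> (i < N)%nat -> (k < n)%nat -> Rabs (xdot i t k) <= K.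
Proof.
  destruct inputs_bounded as [Ku [HKu Hu]].
  destruct disturbances_bounded as [Kd [HKd Hd]].
  destruct (locLip_f_bounded_on_box n q f Hf (Rabs M0 + Ku + Kd)) as [K HK].
  exists (Rabs K). split; [apply Rabs_pos|]. intros t i k Ht Hi Hk.
  pose proof (Rabs_pos M0).
  eapply Rle_trans; [apply HK; auto|apply Rle_abs]; intros j Hj.
  - pose proof (x_in_box t i ltac:(lra) Hi j Hj). lra.
  - pose proof (Hu t i j ltac:(lra) Hi Hj). lra.
  - pose proof (Hd t i j Ht Hi Hj). lra.
Qed.

Definition rho_dot g l t :=
  sumR N (fun j => B j g * sumR n (fun k => Dh (x j t) l k * xdot j t k)).
Definition edge_energy_dot t :=
  sumR E (fun g => sumR q (fun l => 2 * r g t l * rho_dot g l t)).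

Lemma rho_derivative g l t : (l < q)%nat -> 0 < t ->
  derivable_pt_lim (fun t => r g t l) t (rho_dot g l t).
Proof.
  intros Hl Ht. apply derivable_pt_lim_sumR. intros j Hj. apply derivable_pt_lim_scal.
  apply (chain_rule n (fun z => h z l) (fun z k => Dh z l k)).
  - intros z z' Hz. apply Hh_dep; auto.
  - intros z k Hk. apply Hh_der; auto.
  - intros k Hk z eps Heps. apply Hh_cont; auto.
  - intros k Hk. apply Hx; auto.
Qed.

Lemma edge_energy_derivative t : 0 < t -> derivable_pt_lim edge_energy t (edge_energy_dot t).
Proof.
  intros Ht. apply derivable_pt_lim_sumR; intros g Hg. apply derivable_pt_lim_sumR; intros l Hl.
  pose proof (rho_derivative g l t Hl Ht) as Hr.
  replace (2 * r g t l * rho_dot g l t) with (rho_dot g l t * r g t l + r g t l * rho_dot g l t)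
    by ring.
  apply (derivable_pt_lim_ext (fun s => r g s l * r g s l)); [intros; simpl; ring|].
  apply derivable_pt_lim_mult; auto.
Qed.

Lemma edge_energy_dot_bounded : exists K, forall t, 1 <= t -> Rabs (edge_energy_dot t) <= K.
Proof.
  destruct rho_bounded as [Kr [HKr Hr]].
  destruct output_gradients_bounded as [KD [HKD HD]].
  destruct velocities_bounded as [Kf [HKf Hf']].
  destruct (bounded_finite E (fun g => sumR N (fun j => Rabs (B j g)))) as [KB [HKB HB]].
  exists (INR E * (INR q * (2 * Kr * (KB * (INR n * (KD * Kf)))))). intros t Ht.
  apply Rabs_sumR_le; intros g Hg. apply Rabs_sumR_le; intros l Hl.
  apply Rabs_mult_le.
  - rewrite Rabs_mult, Rabs_right by lra. apply Rmult_le_compat_l; [lra|]. apply Hr; auto; lra.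
  - apply Rle_trans with (sumR N (fun j => Rabs (B j g)) * (INR n * (KD * Kf))).
    + apply Rabs_sumR_mult_le. intros j Hj. apply Rabs_sumR_le. intros k Hk.
      apply Rabs_mult_le; [apply HD|apply Hf']; auto; lra.
    + apply Rmult_le_compat_r; [apply Rmult_le_pos; [apply pos_INR|nra]|].
      eapply Rle_trans; [apply Rle_abs|apply HB; auto].
Qed.

Lemma edge_energy_vanishes : forall eps, eps > 0 ->
  exists T, forall t, t >= T -> edge_energy t < eps.
Proof.
  destruct edge_energy_dot_bounded as [LQ HLQ].
  apply (lyapunov_barbalat lyap lyap_dot edge_energy 1 LQ).
  - intros t Ht. apply lyap_derivative; lra.
  - intros t _. apply lyap_dot_le.
  - intros t _. apply lyap_nonneg.
  - intros t _. apply sumR_nonneg; intros; apply sumR_nonneg; intros; apply pow2_ge_0.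
  - apply (lipschitz_of_deriv_bounded edge_energy edge_energy_dot); auto.
    intros t Ht. apply edge_energy_derivative; lra.
Qed.

End ClosedLoop.

Theorem theorem2
  (n q N E : nat) (m : nat -> nat)
  (f : vec -> vec -> vec -> vec) (h : vec -> vec) (sigma : R)
  (s : nat -> vec -> vec) (Rm : nat -> mat)
  (A B Bp : mat) (delta : nat -> R)
  (x : nat -> R -> vec) (w : nat -> R -> vec)
  (zeta : nat -> R -> vec) (kappa : nat -> R -> R)
  (Hf : locLip_f n q f) (Hh : C1map n q h) (Hpass : iOFP n q f h sigma)
  (Hexo : forall i, (i < N)%nat -> exo_ok (m i) (s i))
  (HA : graph_ok N A) (HB : is_incidence N A E B) (HBp : is_pinv N E B Bp)
  (Hdelta : forall g, (g < E)%nat -> delta g > 0)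
  (Hw : forall i k t, (i < N)%nat -> (k < m i)%nat -> 0 < t ->
     derivable_pt_lim (fun t => w i t k) t (s i (w i t) k))
  (Hx : forall i k t, (i < N)%nat -> (k < n)%nat -> 0 < t ->
     derivable_pt_lim (fun t => x i t k) t
       (f (x i t) (uin q N E m Bp Rm B h x zeta kappa i t) (din m Rm w i t) k))
  (Hzeta : forall g c t, (g < E)%nat -> (c < offs m N)%nat -> 0 < t ->
     derivable_pt_lim (fun t => zeta g t c) t
       (sstack N m s (zeta g t) c
        + sumR q (fun l => Hg q N m Bp Rm g l c * rho N B h x g t l)))
  (Hkappa : forall g t, (g < E)%nat -> 0 < t ->
     derivable_pt_lim (kappa g) t
       (delta g * dot q (rho N B h x g t) (rho N B h x g t)))
  (Hbdd : exists M0, forall t, 0 <= t ->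
     (forall i k, (i < N)%nat -> (k < n)%nat -> Rabs (x i t k) <= M0) /\
     (forall g c, (g < E)%nat -> (c < offs m N)%nat -> Rabs (zeta g t c) <= M0) /\
     (forall g, (g < E)%nat -> Rabs (kappa g t) <= M0)) :
  forall i, (i < N)%nat -> forall eps, eps > 0 ->
    exists T, forall t, t >= T ->
      vnorm q (vsub (h (x i t)) (ybar N h x t)) < eps.
Proof.
  intros i Hi eps Heps.
  destruct Hh as [Hh_dep [Dh [Hh_der Hh_cont]]].
  destruct Hpass as [Phi [D1 [D2 [al [au [HPhi [_ [_ [HPhi_bounds Hdiss]]]]]]]]].
  destruct Hbdd as [M0 Hbdd].
  assert (HN : (0 < N)%nat) by lia.
  pose proof (incidence_pinv_projector N A E B Bp HN HA HB HBp) as HP.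
  set (C := sumR E (fun g => Bp g i ^ 2)).
  assert (HC : 0 <= C) by (apply sumR_nonneg; intros; apply pow2_ge_0).
  destruct (edge_energy_vanishes n q N E m f h sigma s Rm B Bp delta x w zeta kappa Dh Phi D1 D2
    Hf Hh_dep Hh_der Hh_cont HPhi (fun z z' => proj1 (HPhi_bounds z z')) Hdiss Hexo HN
    (incidence_colsum N A E B HB) HP Hdelta Hw Hx Hzeta Hkappa M0 Hbdd (eps ^ 2 / (C + 1)))
    as [T HT]; [apply Rdiv_lt_0_compat; [apply pow_lt|]; lra|].
  exists T. intros t Ht. specialize (HT t Ht). unfold edge_energy in HT.
  pose proof (deviation_from_mean_sq_le N E q B Bp (fun j => h (x j t)) HP i Hi) as Hdev.
  fold C in Hdev. apply Rsqr_incrst_0; [|apply vnorm_nonneg|lra]. rewrite !Rsqr_pow2.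
  assert (0 <= sumR E (fun g => sumR q (fun l => rho N B h x g t l ^ 2)))
    by (apply sumR_nonneg; intros; apply sumR_nonneg; intros; apply pow2_ge_0).
  apply (Rmult_lt_compat_l (C + 1)) in HT; [|lra].
  replace ((C + 1) * (eps ^ 2 / (C + 1))) with (eps ^ 2) in HT by (field; lra).
  cbv beta in Hdev. unfold rho in *. unfold ybar. nra.
Qed.
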